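(* Let $A\in\mathfrak{H}_n$, $B\in\mathfrak{M}_n$, $N\in\mathbb{N}$. Then the $N$-approximant satisfies $\big(e^{tA/N}e^{B/N}\big)^N=\sum_{\lambda\in ch_N(\sigma(A))}e^{t\lambda}M_N(\{\lambda\})$ for all $t\in\mathbb{C}$, and the total variation of the discrete measure $M_N$ satisfies \[ \sum_{\lambda\in ch_N(\sigma(A))}\|M_N(\{\lambda\})\|\le n\,e^{n\|B\|}. \]
   Context: Let $\lambda_1,\dots,\lambda_l$ be the distinct eigenvalues of the Hermitian matrix $A$ and $E_{\lambda_1},\dots,E_{\lambda_l}$ the corresponding orthogonal spectral projectors. For $(k_1,\dots,k_N)\in\{1,\dots,l\}^N$, $M_{k_1,\dots,k_N}=E_{\lambda_{k_1}}e^{B/N}\cdots E_{\lambda_{k_N}}e^{B/N}$. The $N$-convex hull $ch_N(\sigma(A))$ is the set of all numbers $\sum_j\frac{n_j}{N}\lambda_j$ with $n_j$ non-negative integers, $n_1+\dots+n_l=N$. For $\lambda\in ch_N(\sigma(A))$, $M_N(\{\lambda\})=\sum M_{k_1,\dots,k_N}$ over all $(k_1,\dots,k_N)$ with $\frac{\lambda_{k_1}+\cdots+\lambda_{k_N}}{N}=\lambda$. $\|\cdot\|$ is the operator norm. *)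

From Stdlib Require Import Reals Lra Lia List Arith ClassicalEpsilon.
Open Scope R_scope.

Record Cx := mkC { Re : R ; Im : R }.
Definition RtoC (x : R) : Cx := mkC x 0.
Definition C0 : Cx := RtoC 0.
Definition C1 : Cx := RtoC 1.
Definition Cadd (z w : Cx) : Cx := mkC (Re z + Re w) (Im z + Im w).
Definition Cmul (z w : Cx) : Cx :=
  mkC (Re z * Re w - Im z * Im w) (Re z * Im w + Im z * Re w).
Definition Cconj (z : Cx) : Cx := mkC (Re z) (- Im z).
Definition Cmod (z : Cx) : R := sqrt (Re z ^ 2 + Im z ^ 2).
Definition Cexp (z : Cx) : Cx := mkC (exp (Re z) * cos (Im z)) (exp (Re z) * sin (Im z)).

Fixpoint Csum (n : nat) (f : nat -> Cx) : Cx :=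
  match n with O => C0 | S m => Cadd (Csum m f) (f m) end.
Fixpoint Rsum (n : nat) (f : nat -> R) : R :=
  match n with O => 0 | S m => Rsum m f + f m end.
Fixpoint Nsum (n : nat) (f : nat -> nat) : nat :=
  match n with O => O | S m => (Nsum m f + f m)%nat end.

(* ---------- vectors and n x n matrices (only indices < n matter) ---------- *)
Definition Vec := nat -> Cx.
Definition Mat := nat -> nat -> Cx.

Definition Mzero : Mat := fun _ _ => C0.
Definition Mid : Mat := fun i j => if Nat.eqb i j then C1 else C0.
Definition Madd (X Y : Mat) : Mat := fun i j => Cadd (X i j) (Y i j).
Definition Mscale (c : Cx) (X : Mat) : Mat := fun i j => Cmul c (X i j).
Definition Mmul (n : nat) (X Y : Mat) : Mat :=
  fun i j => Csum n (fun k => Cmul (X i k) (Y k j)).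
Fixpoint Mpow (n : nat) (X : Mat) (k : nat) : Mat :=
  match k with O => Mid | S k' => Mmul n (Mpow n X k') X end.
Definition Madj (X : Mat) : Mat := fun i j => Cconj (X j i).
Definition Mvec (n : nat) (X : Mat) (v : Vec) : Vec :=
  fun i => Csum n (fun j => Cmul (X i j) (v j)).
Definition Vscale (c : Cx) (v : Vec) : Vec := fun i => Cmul c (v i).

Definition Meq (n : nat) (X Y : Mat) : Prop :=
  forall i j, (i < n)%nat -> (j < n)%nat -> X i j = Y i j.
Definition Veq (n : nat) (v w : Vec) : Prop :=
  forall i, (i < n)%nat -> v i = w i.
Definition Vnonzero (n : nat) (v : Vec) : Prop :=
  exists i, (i < n)%nat /\ v i <> C0.

Definition Msum_list (Xs : list Mat) : Mat := fold_right Madd Mzero Xs.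

Definition is_Mexp (n : nat) (A X : Mat) : Prop :=
  forall i j, (i < n)%nat -> (j < n)%nat ->
    let s := fun m => Csum (S m)
               (fun k => Cmul (RtoC (/ INR (fact k))) (Mpow n A k i j)) in
    Un_cv (fun m => Re (s m)) (Re (X i j)) /\ Un_cv (fun m => Im (s m)) (Im (X i j)).
Definition Mexp (n : nat) (A : Mat) : Mat := epsilon (inhabits Mzero) (is_Mexp n A).

Definition Vnorm (n : nat) (v : Vec) : R := sqrt (Rsum n (fun i => Cmod (v i) ^ 2)).
Definition opnorm_set (n : nat) (X : Mat) : R -> Prop :=
  fun r => exists v : Vec, Vnorm n v <= 1 /\ r = Vnorm n (Mvec n X v).
Definition opnorm (n : nat) (X : Mat) : R :=
  epsilon (inhabits 0) (is_lub (opnorm_set n X)).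

Definition hermitian (n : nat) (A : Mat) : Prop := Meq n A (Madj A).
Definition is_eigenvalue (n : nat) (A : Mat) (mu : Cx) : Prop :=
  exists v, Vnonzero n v /\ Veq n (Mvec n A v) (Vscale mu v).
Definition is_spectral_projector (n : nat) (A : Mat) (mu : R) (E : Mat) : Prop :=
  Meq n (Mmul n E E) E /\ Meq n (Madj E) E /\
  forall v : Vec, Veq n (Mvec n A v) (Vscale (RtoC mu) v) <-> Veq n (Mvec n E v) v.
Definition spectral_data (n : nat) (A : Mat) (l : nat) (lam : nat -> R) (E : nat -> Mat)
  : Prop :=
  (forall j k, (j < l)%nat -> (k < l)%nat -> lam j = lam k -> j = k) /\
  (forall k, (k < l)%nat -> is_eigenvalue n A (RtoC (lam k))) /\
  (forall mu, is_eigenvalue n A mu -> exists k, (k < l)%nat /\ mu = RtoC (lam k)) /\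
  (forall k, (k < l)%nat -> is_spectral_projector n A (lam k) (E k)).

Fixpoint tuples (l N : nat) : list (list nat) :=
  match N with
  | O => nil :: nil
  | S N' => flat_map (fun k => map (cons k) (tuples l N')) (seq 0 l)
  end.

(* M_{k_1..k_N} = E_{k_1} e^{B/N} ... E_{k_N} e^{B/N}, with eB = e^{B/N} *)
Definition Mtuple (n : nat) (E : nat -> Mat) (eB : Mat) (ks : list nat) : Mat :=
  fold_right (fun k acc => Mmul n (Mmul n (E k) eB) acc) Mid ks.

Definition tuple_mean (lam : nat -> R) (N : nat) (ks : list nat) : R :=
  fold_right Rplus 0 (map lam ks) / INR N.

Definition MN (n l N : nat) (lam : nat -> R) (E : nat -> Mat) (B : Mat) (x : R) : Mat :=
  let eB := Mexp n (Mscale (RtoC (/ INR N)) B) in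
  Msum_list (map (fun ks => if Req_EM_T (tuple_mean lam N ks) x
                            then Mtuple n E eB ks else Mzero) (tuples l N)).

Definition in_chN (l N : nat) (lam : nat -> R) (x : R) : Prop :=
  exists ns : nat -> nat, Nsum l ns = N /\
    x = Rsum l (fun j => INR (ns j) / INR N * lam j).

Definition enumerates_chN (l N : nat) (lam : nat -> R) (L : list R) : Prop :=
  NoDup L /\ forall x, In x L <-> in_chN l N lam x.

(* Write [A = sum_k lam_k E_k] with orthogonal projectors [E_k] summing to the
   identity (the spectral theorem, taken from MathComp).  Then
   [e^(tA/N) = sum_k e^(t lam_k / N) E_k], and expanding the N-th power of
   [sum_k e^(t lam_k / N) E_k e^(B/N)] over all N-tuples and grouping the tuples by
   their mean eigenvalue gives the first identity.
   For the bound write [e^(B/N) = I + D] with [|D| <= e^(|B|/N) - 1].  Because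
   [E_k E_k' = 0] for [k <> k'], the sums [F_j] of the norms of all products
   [E_k1 e^(B/N) ... E_kj e^(B/N)] satisfy [F_(j+1) <= (1 + l |D|) F_j], whence
   [sum_x |M_N({x})| <= F_N <= l (1 + l |D|)^N <= l e^(l |B|) <= n e^(n |B|)],
   the number [l] of distinct eigenvalues being at most [n]. *)

From Stdlib Require Import Reals Lra Lia List Arith ClassicalEpsilon Ring Field Classical.
From mathcomp Require all_boot all_algebra Rstruct complex spectral sesquilinear.
From Pilot Require Import Defs.
Open Scope R_scope.

Lemma Cx_ext z w : Re z = Re w -> Im z = Im w -> z = w.
Proof. destruct z, w; simpl; intros; subst; reflexivity. Qed.

Definition Copp z := mkC (- Re z) (- Im z).
Definition Csub z w := Cadd z (Copp w).

Lemma Cring : ring_theory C0 C1 Cadd Cmul Csub Copp (@eq Cx).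
Proof. constructor; intros; apply Cx_ext; unfold Cadd,Cmul,Csub,Copp,C0,C1,RtoC; simpl; ring. Qed.
Add Ring Cring : Cring.

Lemma RtoC_add x y : RtoC (x + y) = Cadd (RtoC x) (RtoC y).
Proof. apply Cx_ext; unfold Cadd, RtoC; simpl; ring. Qed.
Lemma RtoC_0 : RtoC 0 = C0. Proof. reflexivity. Qed.
Lemma RtoC_1 : RtoC 1 = C1. Proof. reflexivity. Qed.
Lemma RtoC_mul x y : RtoC (x * y) = Cmul (RtoC x) (RtoC y).
Proof. apply Cx_ext; unfold Cmul, RtoC; simpl; ring. Qed.

Lemma Cconj_mul z w : Cconj (Cmul z w) = Cmul (Cconj z) (Cconj w).
Proof. apply Cx_ext; unfold Cconj, Cmul; simpl; ring. Qed.
Lemma Cconj_RtoC x : Cconj (RtoC x) = RtoC x.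
Proof. apply Cx_ext; unfold Cconj, RtoC; simpl; ring. Qed.

Lemma Cmul_RtoC_cancel a b z : a <> b -> Cmul (RtoC a) z = Cmul (RtoC b) z -> z = C0.
Proof.
  intros Hab H. assert (H1 := f_equal Re H). assert (H2 := f_equal Im H).
  unfold Cmul, RtoC in *; cbn [Re Im] in *.
  assert ((a - b) * Re z = 0) by lra. assert ((a - b) * Im z = 0) by lra.
  apply Rmult_integral in H0. apply Rmult_integral in H3.
  apply Cx_ext; unfold C0, RtoC; cbn [Re Im]; lra.
Qed.

Lemma Cmul_RtoC_reg_l a z w : a <> 0 -> Cmul (RtoC a) z = Cmul (RtoC a) w -> z = w.
Proof.
  intros Ha H. assert (H1 := f_equal Re H). assert (H2 := f_equal Im H).
  unfold Cmul, RtoC in H1, H2; cbn [Re Im] in H1, H2.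
  apply Cx_ext; apply Rmult_eq_reg_l with a; auto; lra.
Qed.

Fixpoint Cpow (z : Cx) (m : nat) : Cx :=
  match m with O => C1 | S m' => Cmul (Cpow z m') z end.

Lemma Cpow_RtoC a p : Cpow (RtoC a) p = RtoC (a ^ p).
Proof. induction p; simpl. reflexivity. rewrite IHp, <- RtoC_mul. f_equal; ring. Qed.

Lemma Csum_ext n f g : (forall i, (i < n)%nat -> f i = g i) -> Csum n f = Csum n g.
Proof. induction n; simpl; intros H; auto. rewrite IHn by (intros; apply H; lia). rewrite H by lia; auto. Qed.
Lemma Csum_add n f g : Csum n (fun i => Cadd (f i) (g i)) = Cadd (Csum n f) (Csum n g).
Proof. induction n; simpl. unfold C0, RtoC, Cadd; apply Cx_ext; simpl; ring. rewrite IHn; ring. Qed.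
Lemma Csum_0 n : Csum n (fun _ => C0) = C0.
Proof. induction n; simpl; auto. rewrite IHn; ring. Qed.
Lemma Csum_scal_l n c f : Cmul c (Csum n f) = Csum n (fun i => Cmul c (f i)).
Proof. induction n; simpl. ring. rewrite <- IHn; ring. Qed.
Lemma Csum_scal_r n c f : Cmul (Csum n f) c = Csum n (fun i => Cmul (f i) c).
Proof. induction n; simpl. ring. rewrite <- IHn; ring. Qed.
Lemma Csum_swap n m (f : nat -> nat -> Cx) :
  Csum n (fun i => Csum m (fun j => f i j)) = Csum m (fun j => Csum n (fun i => f i j)).
Proof. induction n; simpl. rewrite Csum_0; auto. rewrite IHn, <- Csum_add; auto. Qed.
Lemma Csum_S_l n f : Csum (S n) f = Cadd (f O) (Csum n (fun i => f (S i))).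
Proof. induction n; simpl in *. ring. rewrite IHn. ring. Qed.
Lemma Csum_delta n j f : (j < n)%nat ->
  Csum n (fun i => if Nat.eqb i j then f i else C0) = f j.
Proof.
  induction n; intros H; [lia|]. simpl.
  destruct (Nat.eq_dec j n).
  - subst. rewrite Nat.eqb_refl. rewrite (Csum_ext n _ (fun _ => C0)).
    rewrite Csum_0; ring. intros i Hi. destruct (Nat.eqb_spec i n); [lia|auto].
  - rewrite IHn by lia. destruct (Nat.eqb_spec n j); [lia|]. ring.
Qed.
Lemma Csum_delta' n j f : (j < n)%nat ->
  Csum n (fun i => if Nat.eqb j i then f i else C0) = f j.
Proof.
  intros H. rewrite <- (Csum_delta n j f H). apply Csum_ext; intros.
  rewrite Nat.eqb_sym; auto.
Qed.
Lemma Re_Csum n f : Re (Csum n f) = Rsum n (fun i => Re (f i)).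
Proof. induction n; simpl; auto. rewrite IHn; auto. Qed.
Lemma Im_Csum n f : Im (Csum n f) = Rsum n (fun i => Im (f i)).
Proof. induction n; simpl; auto. rewrite IHn; auto. Qed.
Lemma Cconj_Csum n f : Cconj (Csum n f) = Csum n (fun i => Cconj (f i)).
Proof.
  induction n; simpl. apply Cx_ext; unfold Cconj, C0, RtoC; simpl; ring.
  rewrite <- IHn. apply Cx_ext; unfold Cconj, Cadd; simpl; ring.
Qed.

Lemma Rsum_ext n f g : (forall i, (i < n)%nat -> f i = g i) -> Rsum n f = Rsum n g.
Proof. induction n; simpl; intros H; auto. rewrite IHn by (intros; apply H; lia). rewrite H by lia; auto. Qed.
Lemma Rsum_le n f g : (forall i, (i < n)%nat -> f i <= g i) -> Rsum n f <= Rsum n g.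
Proof.
  induction n; simpl; intros H. lra. assert (f n <= g n) by (apply H; lia).
  assert (Rsum n f <= Rsum n g) by (apply IHn; intros; apply H; lia). lra.
Qed.
Lemma Rsum_nonneg n f : (forall i, (i < n)%nat -> 0 <= f i) -> 0 <= Rsum n f.
Proof.
  intros H. induction n; simpl. lra. assert (0 <= f n) by (apply H; lia).
  assert (0 <= Rsum n f) by (apply IHn; intros; apply H; lia). lra.
Qed.
Lemma Rsum_add n f g : Rsum n (fun i => f i + g i) = Rsum n f + Rsum n g.
Proof. induction n; simpl. ring. rewrite IHn; ring. Qed.
Lemma Rsum_scal n c f : Rsum n (fun i => c * f i) = c * Rsum n f.
Proof. induction n; simpl. ring. rewrite IHn; ring. Qed.
Lemma Rsum_0 n : Rsum n (fun _ => 0) = 0.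
Proof. induction n; simpl; auto. rewrite IHn; ring. Qed.
Lemma Rsum_sum_f_R0 n f : Rsum (S n) f = sum_f_R0 f n.
Proof. induction n; simpl in *. ring. rewrite <- IHn. simpl. auto. Qed.
Lemma Rsum_eq0_terms n f : (forall i, (i < n)%nat -> 0 <= f i) -> Rsum n f = 0 ->
  forall i, (i < n)%nat -> f i = 0.
Proof.
  induction n; intros H0 H1 i Hi; [lia|]. simpl in H1.
  assert (0 <= f n) by (apply H0; lia).
  assert (0 <= Rsum n f) by (apply Rsum_nonneg; intros; apply H0; lia).
  destruct (Nat.eq_dec i n). subst; lra.
  apply IHn; try lra; try lia. intros; apply H0; lia.
Qed.
Lemma Rsum_delta l k c : (k < l)%nat -> Rsum l (fun j => if Nat.eq_dec k j then c j else 0) = c k.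
Proof.
  induction l; intros H. lia. simpl. destruct (Nat.eq_dec k l).
  - subst. rewrite (Rsum_ext _ _ (fun _ => 0)). rewrite Rsum_0. ring.
    intros i Hi. destruct (Nat.eq_dec l i); auto; lia.
  - rewrite IHl by lia. ring.
Qed.

Lemma Nsum_ext l f g : (forall i, (i < l)%nat -> f i = g i) -> Nsum l f = Nsum l g.
Proof. induction l; simpl; intros H; auto. rewrite IHl by (intros; apply H; lia). rewrite H by lia; auto. Qed.
Lemma Nsum_add l f g : Nsum l (fun i => (f i + g i)%nat) = (Nsum l f + Nsum l g)%nat.
Proof. induction l; simpl; auto. rewrite IHl. lia. Qed.
Lemma Nsum_0 l : Nsum l (fun _ => O) = O.
Proof. induction l; simpl; auto. rewrite IHl. auto. Qed.
Lemma Nsum_delta l k : (k < l)%nat -> Nsum l (fun j => if Nat.eq_dec k j then 1%nat else 0%nat) = 1%nat.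
Proof.
  induction l; intros H. lia. simpl. destruct (Nat.eq_dec k l).
  - subst. rewrite (Nsum_ext _ _ (fun _ => O)). rewrite Nsum_0. auto.
    intros i Hi. destruct (Nat.eq_dec l i); auto; lia.
  - rewrite IHl by lia. auto.
Qed.

Definition CLsum {A} (xs : list A) (g : A -> Cx) : Cx := fold_right Cadd C0 (map g xs).

Lemma CLsum_cons {A} x xs (g : A -> Cx) : CLsum (x :: xs) g = Cadd (g x) (CLsum xs g).
Proof. reflexivity. Qed.
Lemma CLsum_app {A} xs ys (g : A -> Cx) : CLsum (xs ++ ys) g = Cadd (CLsum xs g) (CLsum ys g).
Proof. induction xs; simpl. unfold CLsum; simpl; ring. unfold CLsum in *; simpl. rewrite IHxs. ring. Qed.
Lemma CLsum_ext {A} xs (f g : A -> Cx) : (forall x, In x xs -> f x = g x) -> CLsum xs f = CLsum xs g.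
Proof.
  induction xs; intros H; auto. rewrite !CLsum_cons. rewrite H by (simpl; auto).
  rewrite IHxs; auto. intros; apply H; simpl; auto.
Qed.
Lemma CLsum_add {A} xs (f g : A -> Cx) :
  CLsum xs (fun x => Cadd (f x) (g x)) = Cadd (CLsum xs f) (CLsum xs g).
Proof. induction xs. unfold CLsum; simpl; ring. rewrite !CLsum_cons, IHxs. ring. Qed.
Lemma CLsum_scal {A} xs c (f : A -> Cx) : CLsum xs (fun x => Cmul c (f x)) = Cmul c (CLsum xs f).
Proof. induction xs. unfold CLsum; simpl; ring. rewrite !CLsum_cons, IHxs. ring. Qed.
Lemma CLsum_zero {A} xs : CLsum xs (fun _ : A => C0) = C0.
Proof. induction xs; auto. rewrite CLsum_cons, IHxs; ring. Qed.
Lemma CLsum_map {A B} (h : A -> B) xs g : CLsum (map h xs) g = CLsum xs (fun x => g (h x)).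
Proof. unfold CLsum. rewrite map_map. auto. Qed.
Lemma CLsum_flat_map {A B} (h : A -> list B) xs g :
  CLsum (flat_map h xs) g = CLsum xs (fun x => CLsum (h x) g).
Proof. induction xs; auto. simpl. rewrite CLsum_app, CLsum_cons, IHxs. auto. Qed.
Lemma CLsum_swap {A B} (xs : list A) (ys : list B) g :
  CLsum xs (fun x => CLsum ys (fun y => g x y)) = CLsum ys (fun y => CLsum xs (fun x => g x y)).
Proof. induction xs. simpl. rewrite CLsum_zero. auto. rewrite CLsum_cons, IHxs, <- CLsum_add. auto. Qed.
Lemma Csum_CLsum {A} n (xs : list A) g :
  Csum n (fun r => CLsum xs (fun x => g r x)) = CLsum xs (fun x => Csum n (fun r => g r x)).
Proof. induction n; simpl. rewrite CLsum_zero; auto. rewrite IHn, <- CLsum_add. auto. Qed.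
Lemma CLsum_delta {A} (eqd : forall x y : A, {x = y} + {x <> y}) xs (a : A) g :
  NoDup xs -> In a xs ->
  CLsum xs (fun x => if eqd a x then g x else C0) = g a.
Proof.
  induction xs; intros Hn Hi. inversion Hi.
  inversion Hn; subst. rewrite CLsum_cons. destruct (eqd a a0).
  - subst. rewrite (CLsum_ext _ _ (fun _ => C0)). rewrite CLsum_zero; ring.
    intros x Hx. destruct (eqd a0 x); auto. subst; contradiction.
  - destruct Hi. subst; contradiction. rewrite IHxs; auto. ring.
Qed.

Definition Lsum {X} (xs : list X) (g : X -> R) : R := fold_right Rplus 0 (map g xs).

Lemma Lsum_cons {X} x xs (g : X -> R) : Lsum (x :: xs) g = g x + Lsum xs g.
Proof. reflexivity. Qed.
Lemma Lsum_app {X} xs ys (g : X -> R) : Lsum (xs ++ ys) g = Lsum xs g + Lsum ys g.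
Proof. induction xs; simpl. unfold Lsum; simpl; ring. unfold Lsum in *; simpl. rewrite IHxs. ring. Qed.
Lemma Lsum_flat_map {X Y} (h : X -> list Y) xs g : Lsum (flat_map h xs) g = Lsum xs (fun x => Lsum (h x) g).
Proof. induction xs; auto. simpl. rewrite Lsum_app, Lsum_cons, IHxs. auto. Qed.
Lemma Lsum_map {X Y} (h : X -> Y) xs g : Lsum (map h xs) g = Lsum xs (fun x => g (h x)).
Proof. unfold Lsum. rewrite map_map. auto. Qed.
Lemma Lsum_le {X} xs (f g : X -> R) : (forall x, In x xs -> f x <= g x) -> Lsum xs f <= Lsum xs g.
Proof.
  induction xs; intros H. unfold Lsum; simpl; lra. rewrite !Lsum_cons.
  assert (f a <= g a) by (apply H; simpl; auto).
  assert (Lsum xs f <= Lsum xs g) by (apply IHxs; intros; apply H; simpl; auto). lra.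
Qed.
Lemma Lsum_ext {X} xs (f g : X -> R) : (forall x, In x xs -> f x = g x) -> Lsum xs f = Lsum xs g.
Proof. intros H. apply Rle_antisym; apply Lsum_le; intros; rewrite H; auto; lra. Qed.
Lemma Lsum_add {X} xs (f g : X -> R) : Lsum xs (fun x => f x + g x) = Lsum xs f + Lsum xs g.
Proof. induction xs. unfold Lsum; simpl; ring. rewrite !Lsum_cons, IHxs. ring. Qed.
Lemma Lsum_scal {X} xs c (f : X -> R) : Lsum xs (fun x => c * f x) = c * Lsum xs f.
Proof. induction xs. unfold Lsum; simpl; ring. rewrite !Lsum_cons, IHxs. ring. Qed.
Lemma Lsum_zero {X} (xs : list X) : Lsum xs (fun _ => 0) = 0.
Proof. induction xs; auto. rewrite Lsum_cons, IHxs; ring. Qed.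
Lemma Lsum_swap {X Y} (xs : list X) (ys : list Y) g :
  Lsum xs (fun x => Lsum ys (fun y => g x y)) = Lsum ys (fun y => Lsum xs (fun x => g x y)).
Proof. induction xs. simpl. rewrite Lsum_zero. auto. rewrite Lsum_cons, IHxs, <- Lsum_add. auto. Qed.
Lemma Lsum_const {X} (xs : list X) c : Lsum xs (fun _ => c) = INR (length xs) * c.
Proof. induction xs. unfold Lsum; simpl; ring. rewrite Lsum_cons, IHxs. simpl length. rewrite S_INR. ring. Qed.
Lemma Lsum_delta {A} (eqd : forall x y : A, {x = y} + {x <> y}) xs (a : A) c :
  NoDup xs -> In a xs -> Lsum xs (fun x => if eqd a x then c else 0) = c.
Proof.
  induction xs; intros Hn Hi. inversion Hi.
  inversion Hn; subst. rewrite Lsum_cons. destruct (eqd a a0).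
  - subst. rewrite (Lsum_ext _ _ (fun _ => 0)). rewrite Lsum_zero; ring.
    intros x Hx. destruct (eqd a0 x); auto. subst; contradiction.
  - destruct Hi. subst; contradiction. rewrite IHxs; auto. ring.
Qed.
Lemma Lsum_delta_le {A} (eqd : forall x y : A, {x = y} + {x <> y}) xs (a : A) c :
  NoDup xs -> 0 <= c -> Lsum xs (fun x => if eqd a x then c else 0) <= c.
Proof.
  intros Hn Hc. destruct (in_dec eqd a xs) as [Hi|Hi].
  - rewrite Lsum_delta; auto; lra.
  - rewrite (Lsum_ext _ _ (fun _ => 0)), Lsum_zero; auto.
    intros x Hx. destruct (eqd a x); auto. subst; contradiction.
Qed.

Lemma Msum_list_entry (Xs : list Mat) i j : Msum_list Xs i j = CLsum Xs (fun X => X i j).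
Proof. induction Xs; auto. simpl. unfold Madd. rewrite IHXs. auto. Qed.
Lemma Msum_list_map_entry {A} (f : A -> Mat) xs i j :
  Msum_list (map f xs) i j = CLsum xs (fun x => f x i j).
Proof. rewrite Msum_list_entry, CLsum_map. auto. Qed.

Lemma Meq_refl n X : Meq n X X. Proof. intros i j _ _; auto. Qed.
Lemma Meq_sym n X Y : Meq n X Y -> Meq n Y X. Proof. intros H i j Hi Hj; symmetry; auto. Qed.
Lemma Meq_trans n X Y Z : Meq n X Y -> Meq n Y Z -> Meq n X Z.
Proof. intros H1 H2 i j Hi Hj; rewrite H1, H2; auto. Qed.

Lemma Mmul_assoc n X Y Z i j : Mmul n (Mmul n X Y) Z i j = Mmul n X (Mmul n Y Z) i j.
Proof.
  unfold Mmul. rewrite (Csum_ext _ _ (fun k => Csum n (fun r => Cmul (X i r) (Cmul (Y r k) (Z k j))))).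
  - rewrite Csum_swap. apply Csum_ext; intros. rewrite Csum_scal_l. auto.
  - intros. rewrite Csum_scal_r. apply Csum_ext; intros. ring.
Qed.
Lemma Mmul_Meq n X X' Y Y' : Meq n X X' -> Meq n Y Y' -> Meq n (Mmul n X Y) (Mmul n X' Y').
Proof. intros H1 H2 i j Hi Hj. unfold Mmul. apply Csum_ext; intros. rewrite H1, H2; auto. Qed.
Lemma Mmul_Mid_l n X i j : (i < n)%nat -> Mmul n Mid X i j = X i j.
Proof.
  intros Hi. unfold Mmul, Mid.
  rewrite (Csum_ext _ _ (fun k => if Nat.eqb i k then X k j else C0)).
  - apply (Csum_delta' n i (fun k => X k j)); auto.
  - intros k _. destruct (Nat.eqb i k); ring.
Qed.
Lemma Mmul_Mid_r n X i j : (j < n)%nat -> Mmul n X Mid i j = X i j.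
Proof.
  intros Hj. unfold Mmul, Mid.
  rewrite (Csum_ext _ _ (fun k => if Nat.eqb k j then X i k else C0)).
  - apply (Csum_delta n j (fun k => X i k)); auto.
  - intros k _. destruct (Nat.eqb k j); ring.
Qed.
Lemma Mmul_add_r n X Y Z i j : Mmul n X (Madd Y Z) i j = Cadd (Mmul n X Y i j) (Mmul n X Z i j).
Proof. unfold Mmul, Madd. rewrite <- Csum_add. apply Csum_ext; intros; ring. Qed.
Lemma Mmul_add_l n X Y Z i j : Mmul n (Madd X Y) Z i j = Cadd (Mmul n X Z i j) (Mmul n Y Z i j).
Proof. unfold Mmul, Madd. rewrite <- Csum_add. apply Csum_ext; intros; ring. Qed.
Lemma Mmul_scale_l n c X Y i j : Mmul n (Mscale c X) Y i j = Cmul c (Mmul n X Y i j).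
Proof. unfold Mmul, Mscale. rewrite Csum_scal_l. apply Csum_ext; intros; ring. Qed.
Lemma Mmul_scale_r n c X Y i j : Mmul n X (Mscale c Y) i j = Cmul c (Mmul n X Y i j).
Proof. unfold Mmul, Mscale. rewrite Csum_scal_l. apply Csum_ext; intros; ring. Qed.
Lemma Mmul_sum_r {A} n X (f : A -> Mat) xs i j :
  Mmul n X (Msum_list (map f xs)) i j = CLsum xs (fun x => Mmul n X (f x) i j).
Proof.
  unfold Mmul. rewrite <- Csum_CLsum. apply Csum_ext; intros k _.
  rewrite Msum_list_map_entry, <- CLsum_scal. auto.
Qed.
Lemma Mmul_sum_l {A} n X (f : A -> Mat) xs i j :
  Mmul n (Msum_list (map f xs)) X i j = CLsum xs (fun x => Mmul n (f x) X i j).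
Proof.
  unfold Mmul. rewrite <- Csum_CLsum. apply Csum_ext; intros k _.
  rewrite Msum_list_map_entry.
  replace (Cmul (CLsum xs (fun x => f x i k)) (X k j)) with (Cmul (X k j) (CLsum xs (fun x => f x i k))) by ring.
  rewrite <- (CLsum_scal _ (X k j)). apply CLsum_ext; intros; ring.
Qed.
Lemma Mmul_zero_l n X i j : Mmul n Mzero X i j = C0.
Proof. unfold Mmul, Mzero. transitivity (Csum n (fun _ => C0)); [apply Csum_ext; intros; ring | apply Csum_0]. Qed.

Lemma Mpow_S_l n X k i j : (i < n)%nat -> (j < n)%nat ->
  Mpow n X (S k) i j = Mmul n X (Mpow n X k) i j.
Proof.
  revert i j. induction k; intros i j Hi Hj.
  - simpl. rewrite Mmul_Mid_l, Mmul_Mid_r; auto.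
  - change (Mpow n X (S (S k))) with (Mmul n (Mpow n X (S k)) X).
    change (Mpow n X (S k)) with (Mmul n (Mpow n X k) X) at 2.
    rewrite <- Mmul_assoc. apply Mmul_Meq; [|apply Meq_refl|auto|auto].
    intros a b Ha Hb. apply IHk; auto.
Qed.

Lemma Mpow_Meq n X Y k : Meq n X Y -> Meq n (Mpow n X k) (Mpow n Y k).
Proof. intros H. induction k; simpl. apply Meq_refl. apply Mmul_Meq; auto. Qed.

Lemma Mvec_mul n X Y v i : Mvec n (Mmul n X Y) v i = Mvec n X (Mvec n Y v) i.
Proof.
  unfold Mvec, Mmul.
  rewrite (Csum_ext _ _ (fun j => Csum n (fun k => Cmul (X i k) (Cmul (Y k j) (v j))))).
  - rewrite Csum_swap. apply Csum_ext; intros. rewrite Csum_scal_l. auto.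
  - intros. rewrite Csum_scal_r. apply Csum_ext; intros. ring.
Qed.
Lemma Mvec_Veq n X v w i : Veq n v w -> Mvec n X v i = Mvec n X w i.
Proof. intros H. unfold Mvec. apply Csum_ext; intros. rewrite H; auto. Qed.
Lemma Mvec_Meq n X Y v i : Meq n X Y -> (i < n)%nat -> Mvec n X v i = Mvec n Y v i.
Proof. intros H Hi. unfold Mvec. apply Csum_ext; intros. rewrite H; auto. Qed.
Lemma Mvec_Mid n v i : (i < n)%nat -> Mvec n Mid v i = v i.
Proof.
  intros Hi. unfold Mvec, Mid.
  rewrite (Csum_ext _ _ (fun k => if Nat.eqb i k then v k else C0)).
  - apply (Csum_delta' n i v); auto.
  - intros k _. destruct (Nat.eqb i k); ring.
Qed.
Lemma Mvec_zero_v n X v i : Veq n v (fun _ => C0) -> Mvec n X v i = C0.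
Proof.
  intros H. unfold Mvec. transitivity (Csum n (fun _ => C0)).
  - apply Csum_ext; intros. rewrite H; auto; ring.
  - apply Csum_0.
Qed.
Lemma Mvec_Madd n X Y v i : Mvec n (Madd X Y) v i = Cadd (Mvec n X v i) (Mvec n Y v i).
Proof. unfold Mvec, Madd. rewrite <- Csum_add. apply Csum_ext; intros; ring. Qed.
Lemma Mvec_Mscale n c X v i : Mvec n (Mscale c X) v i = Cmul c (Mvec n X v i).
Proof. unfold Mvec, Mscale. rewrite Csum_scal_l. apply Csum_ext; intros; ring. Qed.
Lemma Mvec_Vscale n X c v i : Mvec n X (Vscale c v) i = Cmul c (Mvec n X v i).
Proof. unfold Mvec, Vscale. rewrite Csum_scal_l. apply Csum_ext; intros; ring. Qed.
Lemma Mvec_Msum_list {A} n (f : A -> Mat) xs v i :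
  Mvec n (Msum_list (map f xs)) v i = CLsum xs (fun x => Mvec n (f x) v i).
Proof.
  unfold Mvec. rewrite <- Csum_CLsum. apply Csum_ext; intros k _.
  rewrite Msum_list_map_entry.
  replace (Cmul (CLsum xs (fun x => f x i k)) (v k)) with (Cmul (v k) (CLsum xs (fun x => f x i k))) by ring.
  rewrite <- CLsum_scal. apply CLsum_ext; intros; ring.
Qed.
Lemma Mvec_CLsum_v {X} n M (xs : list X) (g : X -> Vec) i :
  Mvec n M (fun r => CLsum xs (fun x => g x r)) i = CLsum xs (fun x => Mvec n M (g x) i).
Proof. unfold Mvec. rewrite <- Csum_CLsum. apply Csum_ext; intros. rewrite <- CLsum_scal. auto. Qed.
Lemma Mvec_Csum_v n M m (c : nat -> Cx) (g : nat -> Vec) i :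
  Mvec n M (fun r => Csum m (fun p => Cmul (c p) (g p r))) i = Csum m (fun p => Cmul (c p) (Mvec n M (g p) i)).
Proof.
  unfold Mvec. rewrite (Csum_ext n _ (fun j => Csum m (fun p => Cmul (c p) (Cmul (M i j) (g p j))))).
  - rewrite Csum_swap. apply Csum_ext; intros. rewrite Csum_scal_l. auto.
  - intros. rewrite Csum_scal_l. apply Csum_ext; intros. ring.
Qed.

Definition Vunit (c : nat) : Vec := fun r => if Nat.eqb r c then C1 else C0.

Lemma Mvec_Vunit n X c i : (c < n)%nat -> Mvec n X (Vunit c) i = X i c.
Proof.
  intros Hc. unfold Mvec, Vunit.
  rewrite (Csum_ext _ _ (fun k => if Nat.eqb k c then X i k else C0)).
  - apply (Csum_delta n c (fun k => X i k)); auto.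
  - intros k _. destruct (Nat.eqb k c); ring.
Qed.
Lemma Meq_of_Mvec n X Y : (forall v, Veq n (Mvec n X v) (Mvec n Y v)) -> Meq n X Y.
Proof. intros H i j Hi Hj. rewrite <- !(Mvec_Vunit n _ j i) by auto. apply H; auto. Qed.

(** * The spectral theorem, from MathComp *)

Module SpectralTheorem.
Import all_boot all_algebra Rstruct complex spectral sesquilinear.
Import GRing.Theory Num.Theory.
Local Open Scope ring_scope.
Local Open Scope sesquilinear_scope.

Notation CR := (complex.complex R).
Definition toC (z : Cx) : CR := complex.Complex (Defs.Re z) (Defs.Im z).
Definition ofC (x : CR) : Cx := mkC (complex.Re x) (complex.Im x).

Lemma ofCK z : ofC (toC z) = z. Proof. by case: z. Qed.
Lemma ofC_add x y : ofC (x + y) = Cadd (ofC x) (ofC y).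
Proof. by case: x; case: y. Qed.
Lemma ofC_mul x y : ofC (x * y) = Cmul (ofC x) (ofC y).
Proof. case: x => a b; case: y => c d; rewrite /ofC /Cmul /=. f_equal. Qed.
Lemma conj_toC z : Num.Def.conjC (toC z) = toC (Cconj z).
Proof. by case: z. Qed.

Lemma ofC_sum n (F : nat -> CR) :
  ofC (\sum_(i < n) F i) = Csum n (fun i => ofC (F i)).
Proof.
elim: n => [|n IH]; first by rewrite big_ord0.
by rewrite big_ord_recr /= ofC_add IH.
Qed.

Definition fromMx n (M : 'M[CR]_n) : nat -> nat -> CR :=
  fun i j => match @insub _ (fun k => k < n)%N _ i, @insub _ (fun k => k < n)%N _ j with
             | Some i', Some j' => M i' j' | _, _ => 0 end.
Arguments fromMx {n}.

Lemma fromMxE n (M : 'M[CR]_n) (i j : 'I_n) : fromMx M i j = M i j.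
Proof. by rewrite /fromMx !valK. Qed.

(* MathComp acts on row vectors, so [A] is encoded by its transpose: the rows of a
   matrix [P] with [P *m toMx A = diag_mx D *m P] are then eigenvectors of [A]. *)
Definition toMx n (A : Mat) : 'M[CR]_n := \matrix_(i, j) toC (A j i).

Lemma rows_eigvec n (A : Mat) (P : 'M[CR]_n) (D : 'rV[CR]_n) :
  P *m toMx n A = diag_mx D *m P -> forall i, lt i n ->
  Veq n (Mvec n A (fun r => ofC (fromMx P i r))) (Vscale (ofC (fromMx (diag_mx D) i i)) (fun r => ofC (fromMx P i r))).
Proof.
move=> P_diag i /ltP Hi s /ltP Hs.
pose i' := Ordinal Hi; pose s' := Ordinal Hs.
have := congr1 (fun M : 'M_n => M i' s') P_diag.
rewrite mul_diag_mx /= !mxE => E1.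
rewrite /Mvec /Vscale.
have -> : fromMx (diag_mx D) i i = diag_mx D i' i' by rewrite -fromMxE.
have -> : fromMx P i s = P i' s' by rewrite -fromMxE.
rewrite mxE eqxx mulr1n -ofC_mul -E1.
have -> : Csum n (fun j => Cmul (A s j) (ofC (fromMx P i j))) =
          Csum n (fun j => ofC (toC (A s j) * fromMx P i j)).
  by apply: Csum_ext => j _; rewrite ofC_mul ofCK.
rewrite -ofC_sum; congr ofC; apply: eq_bigr => k _.
rewrite (_ : fromMx P i k = P i' k); last by rewrite -fromMxE.
by rewrite mxE mulrC.
Qed.

Lemma rows_span n (P : 'M[CR]_n) : P \in unitmx -> forall v : Vec,
  exists c : nat -> Cx, Veq n v (fun r => Csum n (fun i => Cmul (c i) (ofC (fromMx P i r)))).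
Proof.
move=> P_unit v.
pose vM : 'rV[CR]_n := \row_j toC (v j).
pose c := vM *m invmx P.
have cP : c *m P = vM by rewrite /c mulmxKV.
pose cr : nat -> CR := fun i => match @insub _ (fun k => k < n)%N _ i with
                                 | Some i' => c 0 i' | None => 0 end.
exists (fun i => ofC (cr i)).
move=> r /ltP Hr; pose r' := Ordinal Hr.
have := congr1 (fun M : 'rV_n => M 0 r') cP; rewrite /= !mxE => E1.
rewrite (_ : v r = ofC (toC (v r))); last by rewrite ofCK.
have E2 : toC (v r) = \sum_(j < n) (cr j * fromMx P j r).
  rewrite (_ : toC (v r) = toC (v r')) // -E1; apply: eq_bigr => k _.
  rewrite /cr valK (_ : fromMx P k r = P k r') //.
  by rewrite (_ : r = nat_of_ord r') // fromMxE.
rewrite E2 (ofC_sum n (fun k => cr k * fromMx P k r)).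
by apply: Csum_ext => i _; rewrite ofC_mul.
Qed.

Lemma hermitian_eigenbasis (n : nat) (A : Mat) : Defs.hermitian n A ->
  exists (U : nat -> Vec) (d : nat -> Cx),
    (forall i, lt i n -> Veq n (Mvec n A (U i)) (Vscale (d i) (U i))) /\
    (forall v : Vec, exists c : nat -> Cx,
        Veq n v (fun r => Csum n (fun i => Cmul (c i) (U i r)))).
Proof.
move=> HA.
have A_adj : map_mx Num.Def.conjC (trmx (toMx n A)) = toMx n A.
  apply/matrixP => i j; rewrite !mxE conj_toC.
  by have := HA j i (ltP (ltn_ord j)) (ltP (ltn_ord i)); rewrite /Madj => ->.
have /orthomx_spectralP : toMx n A \is normalmx by apply/normalmxP; rewrite A_adj.
set P := spectralmx _; set D := spectral_diag _ => A_eq.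
have P_unit : P \in unitmx := spectral_unit _.
have P_diag : P *m toMx n A = diag_mx D *m P.
  by rewrite {1}A_eq !mulmxA mulmxV // mul1mx.
exists (fun i r => ofC (fromMx P i r)), (fun i => ofC (fromMx (diag_mx D) i i)).
split; [exact: rows_eigvec | exact: rows_span].
Qed.
End SpectralTheorem.

(** * Norms *)

Lemma sqrt_le_of_sq a b : 0 <= b -> a <= b * b -> sqrt a <= b.
Proof. intros Hb H. rewrite <- (sqrt_square b) by auto. apply sqrt_le_1_alt; auto. Qed.
Lemma le_sqrt_mul_sqrt x y z : x * x <= y * z -> 0 <= y -> 0 <= z -> x <= sqrt y * sqrt z.
Proof.
  intros H Hy Hz. rewrite <- sqrt_mult by auto.
  destruct (Rle_or_lt x 0). assert (0 <= sqrt (y*z)) by apply sqrt_pos. lra.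
  rewrite <- (sqrt_square x) by lra. apply sqrt_le_1_alt; auto.
Qed.

Lemma Cmod_sq z : Cmod z ^ 2 = Re z * Re z + Im z * Im z.
Proof. unfold Cmod. rewrite pow2_sqrt. ring. nra. Qed.
Lemma Cmod_nonneg z : 0 <= Cmod z. Proof. apply sqrt_pos. Qed.
Lemma Cmod_mul z w : Cmod (Cmul z w) = Cmod z * Cmod w.
Proof. unfold Cmod, Cmul. simpl. rewrite <- sqrt_mult by nra. f_equal. ring. Qed.
Lemma Cmod_add z w : Cmod (Cadd z w) <= Cmod z + Cmod w.
Proof.
  assert (H : Re z * Re w + Im z * Im w <= Cmod z * Cmod w).
  { unfold Cmod. apply le_sqrt_mul_sqrt; try nra.
    pose proof (pow2_ge_0 (Re z * Im w - Im z * Re w)). simpl in *. nra. }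
  apply sqrt_le_of_sq. pose proof (Cmod_nonneg z); pose proof (Cmod_nonneg w); lra.
  pose proof (Cmod_sq z); pose proof (Cmod_sq w). simpl in *. nra.
Qed.
Lemma Cmod_C0 : Cmod C0 = 0.
Proof. unfold Cmod, C0, RtoC; cbn [Re Im]. replace (0^2+0^2) with 0 by ring. apply sqrt_0. Qed.
Lemma Cmod_RtoC x : Cmod (RtoC x) = Rabs x.
Proof. unfold Cmod, RtoC; cbn [Re Im]. replace (x^2+0^2) with (x*x) by ring. apply sqrt_Rsqr_abs. Qed.
Lemma Re_le_Cmod z : Rabs (Re z) <= Cmod z.
Proof. unfold Cmod. rewrite <- sqrt_Rsqr_abs. apply sqrt_le_1_alt. unfold Rsqr. nra. Qed.
Lemma Im_le_Cmod z : Rabs (Im z) <= Cmod z.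
Proof. unfold Cmod. rewrite <- sqrt_Rsqr_abs. apply sqrt_le_1_alt. unfold Rsqr. nra. Qed.
Lemma Cmod_Csum n f : Cmod (Csum n f) <= Rsum n (fun i => Cmod (f i)).
Proof. induction n; simpl. rewrite Cmod_C0; lra.
  pose proof (Cmod_add (Csum n f) (f n)). lra. Qed.

Definition Vadd (u v : Vec) : Vec := fun i => Cadd (u i) (v i).
Definition Vrdot n (u v : Vec) := Rsum n (fun i => Re (u i) * Re (v i) + Im (u i) * Im (v i)).

Lemma Vrdot_self_nonneg n v : 0 <= Vrdot n v v.
Proof. apply Rsum_nonneg; intros; apply Rplus_le_le_0_compat; apply Rle_0_sqr. Qed.
Lemma Vnorm_Vrdot n v : Vnorm n v = sqrt (Vrdot n v v).
Proof. unfold Vnorm, Vrdot. f_equal. apply Rsum_ext; intros. apply Cmod_sq. Qed.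
Lemma Vnorm_nonneg n v : 0 <= Vnorm n v. Proof. apply sqrt_pos. Qed.
Lemma Vnorm_sq n v : Vnorm n v * Vnorm n v = Vrdot n v v.
Proof. rewrite Vnorm_Vrdot. apply sqrt_sqrt, Vrdot_self_nonneg. Qed.

Lemma quadratic_nonneg_discriminant p q r : 0 <= q -> (forall t, 0 <= p + 2*t*r + t*t*q) -> r*r <= p*q.
Proof.
  intros Hq H. destruct (Req_dec q 0).
  - subst. destruct (Req_dec r 0). subst; pose proof (H 0); nra.
    pose proof (H (-(p+1)/(2*r))). replace (p + 2 * (- (p + 1) / (2 * r)) * r + - (p + 1) / (2 * r) * (- (p + 1) / (2 * r)) * 0) with (-1) in H1 by (field; auto). lra.
  - assert (q > 0 \/ q < 0) by lra. destruct H1.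
    + pose proof (H (-r/q)). replace (p + 2 * (- r / q) * r + - r / q * (- r / q) * q) with (p - r*r/q) in H2 by (field; lra).
      assert (r*r/q <= p) by lra. apply Rmult_le_compat_r with (r:=q) in H3; [|lra].
      replace (r*r/q*q) with (r*r) in H3 by (field; lra). lra.
    + lra.
Qed.

Lemma Vrdot_Cauchy_Schwarz n u v : Vrdot n u v * Vrdot n u v <= Vrdot n u u * Vrdot n v v.
Proof.
  apply quadratic_nonneg_discriminant. apply Vrdot_self_nonneg. intros t.
  assert (E : Vrdot n u u + 2 * t * Vrdot n u v + t * t * Vrdot n v v =
    Rsum n (fun i => (Re (u i) + t * Re (v i)) * (Re (u i) + t * Re (v i)) + (Im (u i) + t * Im (v i)) * (Im (u i) + t * Im (v i)))).
  { unfold Vrdot. rewrite <- (Rsum_scal n (2*t)), <- (Rsum_scal n (t*t)), <- !Rsum_add. apply Rsum_ext; intros; ring. }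
  rewrite E. apply Rsum_nonneg; intros; apply Rplus_le_le_0_compat; apply Rle_0_sqr.
Qed.
Lemma Vrdot_le_Vnorm n u v : Vrdot n u v <= Vnorm n u * Vnorm n v.
Proof. rewrite !Vnorm_Vrdot. apply le_sqrt_mul_sqrt. apply Vrdot_Cauchy_Schwarz. apply Vrdot_self_nonneg. apply Vrdot_self_nonneg. Qed.

Lemma Vnorm_add n u v : Vnorm n (Vadd u v) <= Vnorm n u + Vnorm n v.
Proof.
  rewrite (Vnorm_Vrdot n (Vadd u v)). apply sqrt_le_of_sq.
  pose proof (Vnorm_nonneg n u); pose proof (Vnorm_nonneg n v); lra.
  assert (E : Vrdot n (Vadd u v) (Vadd u v) = Vrdot n u u + 2 * Vrdot n u v + Vrdot n v v).
  { unfold Vrdot, Vadd, Cadd. simpl. rewrite <- Rsum_scal, <- !Rsum_add. apply Rsum_ext; intros; simpl; ring. }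
  rewrite E. pose proof (Vrdot_le_Vnorm n u v). pose proof (Vnorm_sq n u). pose proof (Vnorm_sq n v). nra.
Qed.
Lemma Vnorm_scale n c v : Vnorm n (Vscale c v) = Cmod c * Vnorm n v.
Proof.
  rewrite !Vnorm_Vrdot. unfold Cmod. rewrite <- sqrt_mult by (try nra; apply Vrdot_self_nonneg).
  f_equal. unfold Vrdot. rewrite <- Rsum_scal. apply Rsum_ext; intros. unfold Vscale, Cmul; simpl. ring.
Qed.
Lemma Vnorm_Veq n v w : Veq n v w -> Vnorm n v = Vnorm n w.
Proof. intros H. unfold Vnorm. f_equal. apply Rsum_ext; intros. rewrite H; auto. Qed.
Lemma Vnorm_eq0 n v : Vnorm n v = 0 -> Veq n v (fun _ => C0).
Proof.
  intros H i Hi. rewrite Vnorm_Vrdot in H. apply sqrt_eq_0 in H; [|apply Vrdot_self_nonneg].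
  assert (Hnn: forall i, (i<n)%nat -> 0 <= Re (v i) * Re (v i) + Im (v i) * Im (v i)).
  { intros; apply Rplus_le_le_0_compat; apply Rle_0_sqr. }
  pose proof (Rsum_eq0_terms n _ Hnn H i Hi). simpl in H0.
  pose proof (Rle_0_sqr (Re (v i))). pose proof (Rle_0_sqr (Im (v i))). unfold Rsqr in *.
  apply Cx_ext; unfold C0, RtoC; cbn [Re Im]; nra.
Qed.
Lemma Vnorm_Veq0 n v : Veq n v (fun _ => C0) -> Vnorm n v = 0.
Proof. intros H. rewrite (Vnorm_Veq n v (fun _ => C0) H). unfold Vnorm.
  rewrite (Rsum_ext _ _ (fun _ => 0)). rewrite Rsum_0. apply sqrt_0.
  intros. rewrite Cmod_C0. ring. Qed.
Lemma Cmod_le_Vnorm n v i : (i < n)%nat -> Cmod (v i) <= Vnorm n v.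
Proof.
  intros Hi. unfold Vnorm. rewrite <- (sqrt_pow2 (Cmod (v i))) by apply Cmod_nonneg.
  apply sqrt_le_1_alt. induction n. lia. cbn [Rsum].
  destruct (Nat.eq_dec i n). subst.
  assert (0 <= Rsum n (fun i => Cmod (v i) ^ 2)) by (apply Rsum_nonneg; intros; apply pow2_ge_0). lra.
  assert (0 <= Cmod (v n) ^ 2) by apply pow2_ge_0. assert (Cmod (v i) ^2 <= Rsum n (fun i => Cmod (v i) ^ 2)) by (apply IHn; lia). lra.
Qed.
Lemma Vnorm_le_Rsum n v : Vnorm n v <= Rsum n (fun i => Cmod (v i)).
Proof.
  unfold Vnorm. apply sqrt_le_of_sq. apply Rsum_nonneg; intros; apply Cmod_nonneg.
  induction n; cbn [Rsum]. lra.
  assert (0 <= Rsum n (fun i => Cmod (v i))) by (apply Rsum_nonneg; intros; apply Cmod_nonneg).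
  pose proof (Cmod_nonneg (v n)). pose proof (Rmult_le_pos _ _ H H0). nra.
Qed.

Definition Vdot n (u v : Vec) := Csum n (fun i => Cmul (Cconj (u i)) (v i)).
Lemma Re_Vdot n u v : Re (Vdot n u v) = Vrdot n u v.
Proof. unfold Vdot, Vrdot. rewrite Re_Csum. apply Rsum_ext; intros. unfold Cmul, Cconj; simpl. ring. Qed.
Lemma Vdot_adj n X u v : Vdot n (Mvec n X u) v = Vdot n u (Mvec n (Madj X) v).
Proof.
  unfold Vdot, Mvec, Madj.
  rewrite (Csum_ext _ _ (fun i => Csum n (fun j => Cmul (Cconj (u j)) (Cmul (Cconj (X i j)) (v i))))).
  rewrite Csum_swap. apply Csum_ext; intros. rewrite Csum_scal_l. auto.
  intros. rewrite Cconj_Csum, Csum_scal_r. apply Csum_ext; intros. rewrite Cconj_mul. ring.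
Qed.
Lemma Vdot_Veq_r n u v w : Veq n v w -> Vdot n u v = Vdot n u w.
Proof. intros H. unfold Vdot. apply Csum_ext; intros. rewrite H; auto. Qed.
Lemma Vdot_Veq_l n u v w : Veq n v w -> Vdot n v u = Vdot n w u.
Proof. intros H. unfold Vdot. apply Csum_ext; intros. rewrite H; auto. Qed.
Lemma Vdot_scale_r n u c v : Vdot n u (Vscale c v) = Cmul c (Vdot n u v).
Proof. unfold Vdot, Vscale. rewrite Csum_scal_l. apply Csum_ext; intros; ring. Qed.
Lemma Vdot_scale_l n u c v : Vdot n (Vscale c v) u = Cmul (Cconj c) (Vdot n v u).
Proof. unfold Vdot, Vscale. rewrite Csum_scal_l. apply Csum_ext; intros. rewrite Cconj_mul. ring. Qed.

Definition Mabs_sum n X := Rsum n (fun i => Rsum n (fun j => Cmod (X i j))).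
Lemma Vnorm_Mvec_le_Mabs_sum n X v : Vnorm n (Mvec n X v) <= Mabs_sum n X * Vnorm n v.
Proof.
  eapply Rle_trans. apply Vnorm_le_Rsum. unfold Mabs_sum. rewrite Rmult_comm, <- Rsum_scal.
  apply Rsum_le; intros i Hi. unfold Mvec. eapply Rle_trans. apply Cmod_Csum.
  rewrite <- Rsum_scal. apply Rsum_le; intros j Hj. rewrite Cmod_mul.
  pose proof (Cmod_le_Vnorm n v j Hj). pose proof (Cmod_nonneg (X i j)). nra.
Qed.
Lemma Vnorm_C0 n : Vnorm n (fun _ => C0) = 0.
Proof. apply Vnorm_Veq0. intros i _; auto. Qed.

Lemma opnorm_spec n X : is_lub (opnorm_set n X) (opnorm n X).
Proof.
  unfold opnorm. apply epsilon_spec.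
  destruct (completeness (opnorm_set n X)) as [m Hm].
  - exists (Mabs_sum n X). intros r [v [Hv ->]]. eapply Rle_trans. apply Vnorm_Mvec_le_Mabs_sum.
    assert (0 <= Mabs_sum n X) by (apply Rsum_nonneg; intros; apply Rsum_nonneg; intros; apply Cmod_nonneg).
    pose proof (Vnorm_nonneg n v). nra.
  - exists 0. exists (fun _ => C0). split. rewrite Vnorm_C0; lra.
    symmetry. apply Vnorm_Veq0. intros i _. apply Mvec_zero_v. intros j _; auto.
  - exists m; auto.
Qed.
Lemma Vnorm_Mvec_le_opnorm n X v : Vnorm n v <= 1 -> Vnorm n (Mvec n X v) <= opnorm n X.
Proof. intros H. apply (proj1 (opnorm_spec n X)). exists v; auto. Qed.
Lemma opnorm_nonneg n X : 0 <= opnorm n X.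
Proof. pose proof (Vnorm_Mvec_le_opnorm n X (fun _ => C0)). rewrite Vnorm_C0 in H.
  rewrite (Vnorm_Veq0 n (Mvec n X (fun _ => C0))) in H. apply H; lra.
  intros i _. apply Mvec_zero_v. intros j _; auto. Qed.
Lemma opnorm_le n X K : (forall v, Vnorm n v <= 1 -> Vnorm n (Mvec n X v) <= K) -> opnorm n X <= K.
Proof. intros H. apply (proj2 (opnorm_spec n X)). intros r [v [Hv ->]]. auto. Qed.
Lemma Vnorm_Mvec_le n X v : Vnorm n (Mvec n X v) <= opnorm n X * Vnorm n v.
Proof.
  destruct (Req_dec (Vnorm n v) 0) as [H0|H0].
  - rewrite (Vnorm_Veq0 n (Mvec n X v)). rewrite H0, Rmult_0_r; lra.
    intros i _. apply Mvec_zero_v. apply Vnorm_eq0; auto.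
  - assert (Hs : 0 < Vnorm n v) by (pose proof (Vnorm_nonneg n v); lra). set (s := Vnorm n v) in *.
    pose proof (Vnorm_Mvec_le_opnorm n X (Vscale (RtoC (/ s)) v)).
    rewrite Vnorm_scale, Cmod_RtoC, Rabs_right in H by (apply Rle_ge, Rlt_le, Rinv_0_lt_compat; auto).
    fold s in H. rewrite Rinv_l in H by auto.
    rewrite (Vnorm_Veq n (Mvec n X (Vscale (RtoC (/ s)) v)) (Vscale (RtoC (/ s)) (Mvec n X v))) in H.
    rewrite Vnorm_scale, Cmod_RtoC, Rabs_right in H by (apply Rle_ge, Rlt_le, Rinv_0_lt_compat; auto).
    specialize (H (Rle_refl 1)).
    apply Rmult_le_compat_r with (r := s) in H; [|lra].
    replace (/ s * Vnorm n (Mvec n X v) * s) with (Vnorm n (Mvec n X v)) in H by (field; lra). lra.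
    intros i _. unfold Vscale. apply Mvec_Vscale.
Qed.
Lemma opnorm_le_bound n X K : 0 <= K -> (forall v, Vnorm n (Mvec n X v) <= K * Vnorm n v) -> opnorm n X <= K.
Proof. intros HK H. apply opnorm_le. intros v Hv. eapply Rle_trans. apply H. nra. Qed.
Lemma opnorm_Meq_le n X Y : Meq n X Y -> opnorm n X <= opnorm n Y.
Proof. intros H. apply opnorm_le_bound. apply opnorm_nonneg. intros v.
  rewrite (Vnorm_Veq n (Mvec n X v) (Mvec n Y v)). apply Vnorm_Mvec_le.
  intros i Hi. apply Mvec_Meq; auto. Qed.
Lemma opnorm_Meq n X Y : Meq n X Y -> opnorm n X = opnorm n Y.
Proof. intros H. apply Rle_antisym; apply opnorm_Meq_le; auto. apply Meq_sym; auto. Qed.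
Lemma opnorm_add n X Y : opnorm n (Madd X Y) <= opnorm n X + opnorm n Y.
Proof.
  apply opnorm_le_bound. pose proof (opnorm_nonneg n X); pose proof (opnorm_nonneg n Y); lra.
  intros v. rewrite (Vnorm_Veq n _ (Vadd (Mvec n X v) (Mvec n Y v))).
  eapply Rle_trans. apply Vnorm_add. pose proof (Vnorm_Mvec_le n X v). pose proof (Vnorm_Mvec_le n Y v). lra.
  intros i _. apply Mvec_Madd.
Qed.
Lemma opnorm_scale n c X : opnorm n (Mscale c X) <= Cmod c * opnorm n X.
Proof.
  apply opnorm_le_bound. pose proof (opnorm_nonneg n X); pose proof (Cmod_nonneg c); nra.
  intros v. rewrite (Vnorm_Veq n _ (Vscale c (Mvec n X v))).
  rewrite Vnorm_scale. pose proof (Vnorm_Mvec_le n X v). pose proof (Cmod_nonneg c). nra.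
  intros i _. apply Mvec_Mscale.
Qed.
Lemma opnorm_mul n X Y : opnorm n (Mmul n X Y) <= opnorm n X * opnorm n Y.
Proof.
  apply opnorm_le_bound. pose proof (opnorm_nonneg n X); pose proof (opnorm_nonneg n Y); nra.
  intros v. rewrite (Vnorm_Veq n _ (Mvec n X (Mvec n Y v))).
  eapply Rle_trans. apply Vnorm_Mvec_le. pose proof (Vnorm_Mvec_le n Y v). pose proof (opnorm_nonneg n X). nra.
  intros i _. apply Mvec_mul.
Qed.
Lemma opnorm_Mid n : opnorm n Mid <= 1.
Proof. apply opnorm_le_bound. lra. intros v. rewrite (Vnorm_Veq n _ v). lra.
  intros i Hi. apply Mvec_Mid; auto. Qed.
Lemma opnorm_zero n X : Meq n X Mzero -> opnorm n X = 0.
Proof. intros H. apply Rle_antisym; [|apply opnorm_nonneg]. apply opnorm_le_bound. lra.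
  intros v. rewrite (Vnorm_Veq0 n (Mvec n X v)). lra.
  intros i Hi. rewrite (Mvec_Meq n X Mzero v i H Hi). unfold Mvec, Mzero.
  transitivity (Csum n (fun _ => C0)). apply Csum_ext; intros; ring. apply Csum_0. Qed.
Lemma Cmod_entry_le_opnorm n X i j : (i < n)%nat -> (j < n)%nat -> Cmod (X i j) <= opnorm n X.
Proof.
  intros Hi Hj. rewrite <- (Mvec_Vunit n X j i Hj). eapply Rle_trans. apply (Cmod_le_Vnorm n); auto.
  apply Vnorm_Mvec_le_opnorm. unfold Vnorm.
  rewrite (Rsum_ext _ _ (fun r => if Nat.eqb r j then 1 else 0)).
  2:{ intros r _. unfold Vunit. destruct (Nat.eqb r j). unfold Cmod, C1, RtoC; cbn [Re Im].
      replace (1^2+0^2) with 1 by ring. rewrite sqrt_1; ring. rewrite Cmod_C0; ring. }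
  clear Hi. induction n. lia. cbn [Rsum]. destruct (Nat.eqb_spec n j).
  subst. rewrite (Rsum_ext _ _ (fun _ => 0)). rewrite Rsum_0. replace (0+1) with 1 by ring. rewrite sqrt_1; lra.
  intros r Hr. destruct (Nat.eqb_spec r j); auto; lia.
  replace (Rsum n (fun r => if Nat.eqb r j then 1 else 0) + 0) with (Rsum n (fun r => if Nat.eqb r j then 1 else 0)) by ring.
  apply IHn. lia.
Qed.
Lemma opnorm_Msum_list {A} n (f : A -> Mat) xs :
  opnorm n (Msum_list (map f xs)) <= fold_right Rplus 0 (map (fun x => opnorm n (f x)) xs).
Proof.
  induction xs; simpl.
  - rewrite opnorm_zero. lra. apply Meq_refl.
  - eapply Rle_trans. apply opnorm_add. lra.
Qed.

(** * Spectral calculus of a Hermitian matrix *)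

Section Spectral.
Variables (n : nat) (A : Mat) (l : nat) (lam : nat -> R) (E : nat -> Mat).
Hypothesis HA : hermitian n A.
Hypothesis HS : spectral_data n A l lam E.

Definition eigvec (mu : R) (w : Vec) := Veq n (Mvec n A w) (Vscale (RtoC mu) w).

Lemma E_idem k : (k < l)%nat -> Meq n (Mmul n (E k) (E k)) (E k).
Proof. intros Hk. destruct HS as (_ & _ & _ & H). apply (H k Hk). Qed.
Lemma E_adj k : (k < l)%nat -> Meq n (Madj (E k)) (E k).
Proof. intros Hk. destruct HS as (_ & _ & _ & H). apply (H k Hk). Qed.
Lemma eigvec_iff_E_fixed k w : (k < l)%nat -> eigvec (lam k) w <-> Veq n (Mvec n (E k) w) w.
Proof. intros Hk. destruct HS as (_ & _ & _ & H). apply (H k Hk). Qed.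
Lemma lam_inj j k : (j < l)%nat -> (k < l)%nat -> lam j = lam k -> j = k.
Proof. destruct HS as (H & _). apply H. Qed.

Lemma eigvec_E_Mvec k v : (k < l)%nat -> eigvec (lam k) (Mvec n (E k) v).
Proof.
  intros Hk. apply eigvec_iff_E_fixed; auto. intros i Hi. rewrite <- Mvec_mul.
  apply Mvec_Meq; auto. apply E_idem; auto.
Qed.

(* Orthogonality of eigenspaces: [lam k <w,u> = <A w,u> = <w,A u> = lam j <w,u>]. *)
Lemma Vdot_eigvec_distinct j k w u : (j < l)%nat -> (k < l)%nat -> j <> k ->
  eigvec (lam k) w -> eigvec (lam j) u -> Vdot n w u = C0.
Proof.
  intros Hj Hk Hjk Hw Hu.
  pose proof (Vdot_adj n A w u) as H1.
  rewrite (Vdot_Veq_l n u _ _ Hw), Vdot_scale_l, Cconj_RtoC in H1.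
  rewrite (Vdot_Veq_r n w (Mvec n (Madj A) u) (Mvec n A u)) in H1.
  - rewrite (Vdot_Veq_r n w _ _ Hu), Vdot_scale_r in H1.
    apply (Cmul_RtoC_cancel (lam k) (lam j)); auto.
    intros He. apply Hjk. symmetry. apply lam_inj; auto.
  - intros i Hi. apply Mvec_Meq; auto. apply Meq_sym; auto.
Qed.

Lemma E_Mvec_eigvec_other j k w : (j < l)%nat -> (k < l)%nat -> j <> k -> eigvec (lam k) w ->
  Veq n (Mvec n (E j) w) (fun _ => C0).
Proof.
  intros Hj Hk Hjk Hw. set (u := Mvec n (E j) w).
  assert (Hc : Vdot n w u = C0) by (apply (Vdot_eigvec_distinct j k); auto; apply eigvec_E_Mvec; auto).
  assert (Hfix : Veq n (Mvec n (E j) u) u) by (apply eigvec_iff_E_fixed; auto; apply eigvec_E_Mvec; auto).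
  apply Vnorm_eq0. rewrite Vnorm_Vrdot, <- Re_Vdot.
  unfold u at 1. rewrite Vdot_adj.
  rewrite (Vdot_Veq_r n w _ (Mvec n (E j) u)), (Vdot_Veq_r n w _ u Hfix), Hc.
  - unfold C0, RtoC; cbn [Re]. apply sqrt_0.
  - intros i Hi. apply Mvec_Meq; auto. apply E_adj; auto.
Qed.

Lemma E_Mvec_eigvec k k' w : (k < l)%nat -> (k' < l)%nat -> eigvec (lam k') w ->
  Veq n (Mvec n (E k) w) (if Nat.eq_dec k k' then w else (fun _ => C0)).
Proof.
  intros Hk Hk' Hw. destruct (Nat.eq_dec k k').
  - subst. apply eigvec_iff_E_fixed; auto.
  - apply (E_Mvec_eigvec_other k k'); auto.
Qed.

Lemma eigvec_cases (w : Vec) (d : Cx) :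
  Veq n (Mvec n A w) (Vscale d w) ->
  Veq n w (fun _ => C0) \/ exists k, (k < l)%nat /\ eigvec (lam k) w /\ Vnonzero n w.
Proof.
  intros Hw. destruct (classic (Vnonzero n w)) as [Hnz|Hz].
  - right. destruct HS as (_ & _ & H3 & _). destruct (H3 d) as [k [Hk Hd]].
    + exists w; split; auto.
    + exists k. rewrite Hd in Hw. split; auto.
  - left. intros i Hi. destruct (classic (w i = C0)); auto. exfalso. apply Hz. exists i; auto.
Qed.

Lemma sum_E_Mvec v : Veq n (fun i => CLsum (seq 0 l) (fun k => Mvec n (E k) v i)) v.
Proof.
  destruct (SpectralTheorem.hermitian_eigenbasis n A HA) as (U & d & HU & Hspan).
  destruct (Hspan v) as [c Hc].
  intros i Hi.
  rewrite (CLsum_ext _ _ (fun k => Csum n (fun p => Cmul (c p) (Mvec n (E k) (U p) i)))).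
  2:{ intros k _. rewrite (Mvec_Veq n (E k) v _ i Hc). apply Mvec_Csum_v. }
  rewrite <- Csum_CLsum, (Hc i Hi). apply Csum_ext. intros p Hp.
  rewrite CLsum_scal. f_equal.
  destruct (eigvec_cases (U p) (d p) (HU p Hp)) as [Hz | (k0 & Hk0 & Heig & _)].
  - rewrite (CLsum_ext _ _ (fun _ => C0)), CLsum_zero, Hz; auto.
    intros k _. apply Mvec_zero_v; auto.
  - rewrite (CLsum_ext _ _ (fun k => if Nat.eq_dec k0 k then U p i else C0)).
    + apply (CLsum_delta Nat.eq_dec (seq 0 l) k0 (fun _ => U p i)).
      apply seq_NoDup. apply in_seq; lia.
    + intros k Hk. apply in_seq in Hk. rewrite (E_Mvec_eigvec k k0 (U p)); auto; try lia.
      destruct (Nat.eq_dec k k0); destruct (Nat.eq_dec k0 k); auto; lia.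
Qed.

(* If no basis vector were an eigenvector for [lam k], then [E k] would kill the
   whole basis, hence also a nonzero eigenvector it fixes. *)
Lemma eigenbasis_meets_eigenvalue (U : nat -> Vec) (d : nat -> Cx) :
  (forall p, (p < n)%nat -> Veq n (Mvec n A (U p)) (Vscale (d p) (U p))) ->
  (forall v : Vec, exists c : nat -> Cx, Veq n v (fun r => Csum n (fun p => Cmul (c p) (U p r)))) ->
  forall k, (k < l)%nat -> exists p, (p < n)%nat /\ eigvec (lam k) (U p) /\ Vnonzero n (U p).
Proof.
  intros HU Hspan k Hk. apply NNPP. intros Hno.
  destruct HS as (_ & H2 & _ & _). destruct (H2 k Hk) as [w [[i [Hi Hwi]] Hw]].
  assert (Hfix : Veq n (Mvec n (E k) w) w) by (apply eigvec_iff_E_fixed; auto).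
  destruct (Hspan w) as [c Hc].
  assert (Hzero : forall p, (p < n)%nat -> Veq n (Mvec n (E k) (U p)) (fun _ => C0)).
  { intros p Hp. destruct (eigvec_cases (U p) (d p) (HU p Hp)) as [Hz | (k0 & Hk0 & Heig & Hnz)].
    - intros r _. apply Mvec_zero_v; auto.
    - destruct (Nat.eq_dec k k0).
      + subst. exfalso. apply Hno. exists p; auto.
      + apply (E_Mvec_eigvec_other k k0); auto. }
  apply Hwi. rewrite <- (Hfix i Hi), (Mvec_Veq n (E k) w _ i Hc), Mvec_Csum_v.
  transitivity (Csum n (fun _ => C0)).
  - apply Csum_ext; intros p Hp. rewrite (Hzero p Hp i Hi). ring.
  - apply Csum_0.
Qed.

Lemma num_eigenvalues_le_dim : (l <= n)%nat.
Proof.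
  destruct (SpectralTheorem.hermitian_eigenbasis n A HA) as (U & d & HU & Hspan).
  pose proof (eigenbasis_meets_eigenvalue U d HU Hspan) as Hex.
  set (f := fun k => epsilon (inhabits O) (fun p => (p < n)%nat /\ eigvec (lam k) (U p) /\ Vnonzero n (U p))).
  assert (Hf : forall k, (k < l)%nat -> (f k < n)%nat /\ eigvec (lam k) (U (f k)) /\ Vnonzero n (U (f k))).
  { intros k Hk. unfold f. apply epsilon_spec. apply Hex; auto. }
  assert (Hnd : NoDup (map f (seq 0 l))).
  { apply NoDup_map_NoDup_ForallPairs; [|apply seq_NoDup].
    intros a b Ha Hb Hab. apply in_seq in Ha; apply in_seq in Hb.
    destruct (Hf a ltac:(lia)) as (_ & Ea & [i [Hi Hnz]]). destruct (Hf b ltac:(lia)) as (_ & Eb & _).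
    rewrite Hab in Ea. destruct (Nat.eq_dec a b); auto. exfalso.
    pose proof (E_Mvec_eigvec a a (U (f b)) ltac:(lia) ltac:(lia) Ea i Hi).
    pose proof (E_Mvec_eigvec a b (U (f b)) ltac:(lia) ltac:(lia) Eb i Hi).
    destruct (Nat.eq_dec a a); [|lia]. destruct (Nat.eq_dec a b); [lia|].
    apply Hnz. congruence. }
  apply NoDup_incl_length with (l' := seq 0 n) in Hnd.
  - rewrite length_map, !length_seq in Hnd; auto.
  - intros p Hp. apply in_map_iff in Hp. destruct Hp as [k [<- Hk]]. apply in_seq in Hk.
    apply in_seq. destruct (Hf k ltac:(lia)); lia.
Qed.

(* [E k] is an orthogonal projection: [|E v|^2 = Re <E v, E v> = Re <v, E v> <= |v| |E v|]. *)
Lemma opnorm_E_le1 k : (k < l)%nat -> opnorm n (E k) <= 1.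
Proof.
  intros Hk. apply opnorm_le_bound. lra. intros v.
  set (u := Mvec n (E k) v).
  assert (H : Vrdot n u u = Vrdot n v u).
  { rewrite <- !Re_Vdot. unfold u at 1. rewrite Vdot_adj. f_equal. apply Vdot_Veq_r.
    intros i Hi. rewrite (Mvec_Meq n _ (E k)); auto.
    - unfold u. rewrite <- Mvec_mul. apply Mvec_Meq; auto. apply E_idem; auto.
    - apply E_adj; auto. }
  pose proof (Vrdot_le_Vnorm n v u). rewrite <- H, <- Vnorm_sq in H0.
  pose proof (Vnorm_nonneg n u). pose proof (Vnorm_nonneg n v). fold u. nra.
Qed.

Lemma E_Mvec_E_Mvec j k v : (j < l)%nat -> (k < l)%nat ->
  Veq n (Mvec n (E j) (Mvec n (E k) v)) (if Nat.eq_dec j k then Mvec n (E k) v else (fun _ => C0)).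
Proof. intros Hj Hk. apply E_Mvec_eigvec; auto. apply eigvec_E_Mvec; auto. Qed.

Lemma E_mul_E j k : (j < l)%nat -> (k < l)%nat ->
  Meq n (Mmul n (E j) (E k)) (if Nat.eq_dec j k then E k else Mzero).
Proof.
  intros Hj Hk. apply Meq_of_Mvec. intros v i Hi. rewrite Mvec_mul, (E_Mvec_E_Mvec j k v Hj Hk i Hi).
  destruct (Nat.eq_dec j k); auto. unfold Mvec, Mzero. symmetry.
  transitivity (Csum n (fun _ => C0)); [apply Csum_ext; intros; ring | apply Csum_0].
Qed.

Definition spectral_sum (g : nat -> Cx) : Mat := Msum_list (map (fun k => Mscale (g k) (E k)) (seq 0 l)).

Lemma spectral_sum_Mvec g v i :
  Mvec n (spectral_sum g) v i = CLsum (seq 0 l) (fun k => Cmul (g k) (Mvec n (E k) v i)).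
Proof. unfold spectral_sum. rewrite Mvec_Msum_list. apply CLsum_ext; intros. apply Mvec_Mscale. Qed.

Lemma spectral_sum_one : Meq n (spectral_sum (fun _ => C1)) Mid.
Proof.
  apply Meq_of_Mvec. intros v i Hi. rewrite spectral_sum_Mvec, Mvec_Mid by auto.
  rewrite <- (sum_E_Mvec v i Hi). apply CLsum_ext; intros; ring.
Qed.

Lemma spectral_sum_mul g h :
  Meq n (Mmul n (spectral_sum g) (spectral_sum h)) (spectral_sum (fun k => Cmul (g k) (h k))).
Proof.
  apply Meq_of_Mvec. intros v i Hi. rewrite Mvec_mul, !spectral_sum_Mvec.
  apply CLsum_ext. intros j Hj. apply in_seq in Hj.
  replace (Mvec n (E j) (Mvec n (spectral_sum h) v) i) with (Cmul (h j) (Mvec n (E j) v i)); [ring|].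
  symmetry. rewrite (Mvec_Veq n (E j) _ (fun r => CLsum (seq 0 l) (fun k => Cmul (h k) (Mvec n (E k) v r))))
    by (intros r _; apply spectral_sum_Mvec).
  rewrite Mvec_CLsum_v.
  rewrite (CLsum_ext _ _ (fun k => if Nat.eq_dec j k then Cmul (h j) (Mvec n (E j) v i) else C0)).
  - apply (CLsum_delta Nat.eq_dec (seq 0 l) j (fun _ => Cmul (h j) (Mvec n (E j) v i))).
    apply seq_NoDup. apply in_seq; lia.
  - intros k Hk. apply in_seq in Hk.
    rewrite (Mvec_Veq n (E j) _ (Vscale (h k) (Mvec n (E k) v))) by (intros r _; reflexivity).
    rewrite Mvec_Vscale, (E_Mvec_E_Mvec j k v) by (auto; lia).
    destruct (Nat.eq_dec j k); subst; auto. ring.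
Qed.

Lemma spectral_sum_scale c g : Meq n (Mscale c (spectral_sum g)) (spectral_sum (fun k => Cmul c (g k))).
Proof.
  intros i j _ _. unfold spectral_sum, Mscale at 1. rewrite !Msum_list_map_entry, <- CLsum_scal.
  apply CLsum_ext; intros. unfold Mscale. ring.
Qed.

Lemma A_spectral_sum : Meq n A (spectral_sum (fun k => RtoC (lam k))).
Proof.
  apply Meq_of_Mvec. intros v i Hi. rewrite spectral_sum_Mvec.
  rewrite (Mvec_Veq n A v (fun r => CLsum (seq 0 l) (fun k => Mvec n (E k) v r)))
    by (intros r Hr; symmetry; apply (sum_E_Mvec v r Hr)).
  rewrite Mvec_CLsum_v. apply CLsum_ext. intros k Hk. apply in_seq in Hk.
  apply (eigvec_E_Mvec k v ltac:(lia)); auto.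
Qed.

Lemma Mpow_scale_A c m :
  Meq n (Mpow n (Mscale c A) m) (spectral_sum (fun k => Cpow (Cmul c (RtoC (lam k))) m)).
Proof.
  induction m.
  - apply Meq_sym, spectral_sum_one.
  - simpl. eapply Meq_trans; [apply Mmul_Meq; [apply IHm|]|apply spectral_sum_mul].
    eapply Meq_trans; [|apply spectral_sum_scale].
    intros i j Hi Hj. unfold Mscale. rewrite A_spectral_sum; auto.
Qed.
End Spectral.

(** * The exponential series *)

Definition exp_term (x : Cx) (p : nat) : Cx := Cmul (RtoC (/ INR (fact p))) (Cpow x p).
Definition Cconv k (f g : nat -> Cx) := Csum (S k) (fun p => Cmul (f p) (g (k - p)%nat)).

Lemma INR_fact_neq_0 p : INR (fact p) <> 0.
Proof. apply not_0_INR, fact_neq_0. Qed.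

Lemma Cmul_INR_0_l z : Cmul (RtoC (INR 0)) z = C0.
Proof. simpl INR. rewrite RtoC_0. ring. Qed.

Lemma exp_term_S x p : Cmul x (exp_term x p) = Cmul (RtoC (INR (S p))) (exp_term x (S p)).
Proof.
  unfold exp_term. cbn [Cpow]. rewrite fact_simpl, mult_INR.
  pose proof (INR_fact_neq_0 p). pose proof (S_INR p). pose proof (pos_INR p).
  apply Cx_ext; unfold Cmul, RtoC; cbn [Re Im]; field; lra.
Qed.

Lemma Cmul_Cconv_exp_term_l x y k : Cmul x (Cconv k (exp_term x) (exp_term y)) =
  Csum (S (S k)) (fun p => Cmul (RtoC (INR p)) (Cmul (exp_term x p) (exp_term y (S k - p)%nat))).
Proof.
  rewrite Csum_S_l, Cmul_INR_0_l. unfold Cconv. rewrite Csum_scal_l.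
  rewrite (Csum_ext _ _ (fun p => Cmul (RtoC (INR (S p))) (Cmul (exp_term x (S p)) (exp_term y (S k - S p)%nat)))).
  - ring.
  - intros p Hp. simpl (S k - S p)%nat.
    transitivity (Cmul (Cmul x (exp_term x p)) (exp_term y (k - p)%nat)); [ring|].
    rewrite exp_term_S. ring.
Qed.

Lemma Cmul_Cconv_exp_term_r x y k : Cmul y (Cconv k (exp_term x) (exp_term y)) =
  Csum (S (S k)) (fun p => Cmul (RtoC (INR (S k - p))) (Cmul (exp_term x p) (exp_term y (S k - p)%nat))).
Proof.
  change (Csum (S (S k)) ?f) with (Cadd (Csum (S k) f) (f (S k))). cbv beta.
  rewrite Nat.sub_diag, Cmul_INR_0_l. unfold Cconv. rewrite Csum_scal_l.
  transitivity (Csum (S k) (fun p => Cmul (RtoC (INR (S (k - p)))) (Cmul (exp_term x p) (exp_term y (S (k - p)))))).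
  - apply Csum_ext. intros p Hp.
    transitivity (Cmul (exp_term x p) (Cmul y (exp_term y (k - p)%nat))); [ring|].
    rewrite exp_term_S. ring.
  - match goal with |- _ = Cadd ?s C0 => transitivity s; [|ring] end.
    apply Csum_ext. intros p Hp. replace (S k - p)%nat with (S (k - p)) by lia. reflexivity.
Qed.

(* The binomial theorem in the form [(x+y)^k/k! = sum_p x^p/p! y^(k-p)/(k-p)!], by
   induction through [k e_k(z) = z e_(k-1)(z)] (lemma [exp_term_S]). *)
Lemma exp_term_add x y k : exp_term (Cadd x y) k = Cconv k (exp_term x) (exp_term y).
Proof.
  induction k.
  - unfold Cconv, exp_term. apply Cx_ext; cbn; field.
  - apply (Cmul_RtoC_reg_l (INR (S k))); [apply not_0_INR; lia|].
    rewrite <- exp_term_S, IHk.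
    replace (Cmul (Cadd x y) (Cconv k (exp_term x) (exp_term y))) with
      (Cadd (Cmul x (Cconv k (exp_term x) (exp_term y))) (Cmul y (Cconv k (exp_term x) (exp_term y)))) by ring.
    rewrite Cmul_Cconv_exp_term_l, Cmul_Cconv_exp_term_r, <- Csum_add. unfold Cconv. rewrite Csum_scal_l.
    apply Csum_ext. intros p Hp.
    replace (INR (S k)) with (INR p + INR (S k - p)) by (rewrite <- plus_INR; f_equal; lia).
    rewrite RtoC_add. ring.
Qed.

Definition Ccv (s : nat -> Cx) (z : Cx) := Un_cv (fun m => Re (s m)) (Re z) /\ Un_cv (fun m => Im (s m)) (Im z).

Lemma cv_const c : Un_cv (fun _ => c) c.
Proof. intros eps He. exists O. intros. unfold Rdist. rewrite Rminus_diag, Rabs_R0. auto. Qed.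
Lemma Un_cv_ext_from (u v : nat -> R) l : (forall N, (N >= 1)%nat -> u N = v N) -> Un_cv v l -> Un_cv u l.
Proof. intros H Hv eps He. destruct (Hv eps He) as [N HN]. exists (S N). intros m Hm.
  rewrite H by lia. apply HN; lia. Qed.
Lemma Un_cv_ext (u v : nat -> R) l : (forall N, u N = v N) -> Un_cv v l -> Un_cv u l.
Proof. intros H. apply Un_cv_ext_from. intros; auto. Qed.
Lemma Un_cv_squeeze0 (u w : nat -> R) : (forall N, (N >= 1)%nat -> Rabs (u N) <= w N) -> Un_cv w 0 -> Un_cv u 0.
Proof. intros H Hw eps He. destruct (Hw eps He) as [N HN]. exists (S N). intros m Hm.
  specialize (HN m ltac:(lia)). specialize (H m ltac:(lia)). unfold Rdist in *.
  rewrite Rminus_0_r in *. apply Rle_lt_trans with (w m); auto.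
  eapply Rle_lt_trans; [apply Rle_abs|exact HN]. Qed.
Lemma Un_cv_shift (u : nat -> R) l : Un_cv (fun m => u (S m)) l -> Un_cv u l.
Proof. intros H eps He. destruct (H eps He) as [N HN]. exists (S N). intros m Hm.
  destruct m. lia. apply HN; lia. Qed.
Lemma cv_even_odd (u T : nat -> R) L : Un_cv T L -> (forall k, u (2*k)%nat = T k) -> (forall k, u (2*k+1)%nat = T k) -> Un_cv u L.
Proof.
  intros HT He Ho eps Heps. destruct (HT eps Heps) as [N HN]. exists (2*N)%nat. intros m Hm.
  destruct (Nat.Even_or_Odd m) as [[k ->]|[k ->]].
  rewrite He. apply HN; lia. rewrite Ho. apply HN; lia.
Qed.

Lemma exp_cv x : Un_cv (sum_f_R0 (fun i => / INR (fact i) * x ^ i)) (exp x).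
Proof. unfold exp. destruct (exist_exp x) as [l Hl]. simpl. exact Hl. Qed.

(* The remainder in Stdlib's [cauchy_finite] identity for [An], [Bn] is dominated
   termwise by the corresponding remainder for [Aa], [Bb], which the last
   hypothesis says tends to 0. *)
Lemma Cauchy_product_cv An Bn Aa Bb LA LB :
  (forall p, Rabs (An p) <= Aa p) -> (forall q, Rabs (Bn q) <= Bb q) ->
  Un_cv (sum_f_R0 An) LA -> Un_cv (sum_f_R0 Bn) LB ->
  Un_cv (fun N => sum_f_R0 Aa N * sum_f_R0 Bb N - sum_f_R0 (fun k => sum_f_R0 (fun p => Aa p * Bb (k-p)%nat) k) N) 0 ->
  Un_cv (fun N => sum_f_R0 (fun k => sum_f_R0 (fun p => An p * Bn (k - p)%nat) k) N) (LA * LB).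
Proof.
  intros HA HB CA CB CR.
  set (Rm := fun (A B : nat -> R) N => sum_f_R0 (fun k => sum_f_R0 (fun l => A (S (l + k)) * B (N - l)%nat) (Init.Nat.pred (N - k))) (Init.Nat.pred N)).
  assert (Hrem : Un_cv (Rm An Bn) 0).
  { apply (Un_cv_squeeze0 _ (fun N => sum_f_R0 Aa N * sum_f_R0 Bb N - sum_f_R0 (fun k => sum_f_R0 (fun p => Aa p * Bb (k-p)%nat) k) N)); auto.
    intros N HN. rewrite (cauchy_finite Aa Bb N) by lia.
    replace (sum_f_R0 (fun k => sum_f_R0 (fun p => Aa p * Bb (k - p)%nat) k) N + _ - sum_f_R0 (fun k => sum_f_R0 (fun p => Aa p * Bb (k - p)%nat) k) N) with (Rm Aa Bb N) by (unfold Rm; ring).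
    unfold Rm. eapply Rle_trans. apply Rsum_abs. apply sum_Rle. intros k Hk.
    eapply Rle_trans. apply Rsum_abs. apply sum_Rle. intros p Hp.
    rewrite Rabs_mult. apply Rmult_le_compat; try apply Rabs_pos; auto. }
  apply (Un_cv_ext_from _ (fun N => sum_f_R0 An N * sum_f_R0 Bn N - Rm An Bn N)).
  intros N HN. rewrite (cauchy_finite An Bn N) by lia. unfold Rm. ring.
  replace (LA * LB) with (LA * LB - 0) by ring. apply CV_minus; auto. apply CV_mult; auto.
Qed.

Lemma exp_term_RtoC a p : exp_term (RtoC a) p = RtoC (/ INR (fact p) * a ^ p).
Proof. unfold exp_term. rewrite Cpow_RtoC, <- RtoC_mul. auto. Qed.
Lemma Re_Cconv_RtoC a g k : Re (Cconv k (exp_term (RtoC a)) g) =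
  sum_f_R0 (fun p => (/ INR (fact p) * a ^ p) * Re (g (k - p)%nat)) k.
Proof. unfold Cconv. rewrite Re_Csum, Rsum_sum_f_R0. apply sum_eq. intros p _.
  rewrite exp_term_RtoC. unfold Cmul, RtoC; cbn [Re Im]. ring. Qed.
Lemma Im_Cconv_RtoC a g k : Im (Cconv k (exp_term (RtoC a)) g) =
  sum_f_R0 (fun p => (/ INR (fact p) * a ^ p) * Im (g (k - p)%nat)) k.
Proof. unfold Cconv. rewrite Im_Csum, Rsum_sum_f_R0. apply sum_eq. intros p _.
  rewrite exp_term_RtoC. unfold Cmul, RtoC; cbn [Re Im]. ring. Qed.

Lemma exp_Cauchy_product_rem (al be : R) :
  Un_cv (fun N => sum_f_R0 (fun p => / INR (fact p) * al ^ p) N * sum_f_R0 (fun q => / INR (fact q) * be ^ q) N -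
     sum_f_R0 (fun k => sum_f_R0 (fun p => (/ INR (fact p) * al ^ p) * (/ INR (fact (k - p)) * be ^ (k-p))) k) N) 0.
Proof.
  replace 0 with (exp al * exp be - exp (al + be)) by (rewrite exp_plus; ring).
  apply CV_minus. apply CV_mult; apply exp_cv.
  apply (Un_cv_ext _ (sum_f_R0 (fun i => / INR (fact i) * (al + be) ^ i))); [|apply exp_cv].
  intros N. apply sum_eq. intros k _.
  pose proof (exp_term_add (RtoC al) (RtoC be) k) as H. rewrite <- RtoC_add, exp_term_RtoC in H.
  apply (f_equal Re) in H. rewrite Re_Cconv_RtoC in H. cbn [Re RtoC] in H. rewrite H.
  apply sum_eq. intros p _. rewrite exp_term_RtoC. reflexivity.
Qed.

Section ImaginaryExponential.
Variable b : R.
Let y := mkC 0 b.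

Lemma Cpow_imag j : Cpow y (2*j) = RtoC ((-1)^j * b^(2*j)) /\ Cpow y (2*j+1) = mkC 0 ((-1)^j * b^(2*j+1)).
Proof.
  induction j.
  - simpl. split. apply Cx_ext; unfold C1, RtoC; cbn [Re Im]; ring. apply Cx_ext; unfold Cmul, C1, RtoC, y; cbn [Re Im]; ring.
  - destruct IHj as [He Ho].
    assert (He' : Cpow y (2 * S j) = RtoC ((-1)^(S j) * b^(2 * S j))).
    { replace (2 * S j)%nat with (S (2*j+1)) by lia. cbn [Cpow]. rewrite Ho.
      replace (S (2*j+1)) with (2*j+1+1)%nat by lia.
      apply Cx_ext; unfold Cmul, RtoC, y; cbn [Re Im]. rewrite !pow_add. simpl. ring. ring. }
    split; auto. replace (2 * S j + 1)%nat with (S (2 * S j)) by lia. cbn [Cpow]. rewrite He'.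
    apply Cx_ext; unfold Cmul, RtoC, y; cbn [Re Im]. ring.
    replace (S (2 * S j)) with (2 * S j + 1)%nat by lia. rewrite pow_add. simpl. ring.
Qed.

Lemma pow_even_Rsqr j : b ^ (2 * j) = (Rsqr b) ^ j.
Proof. rewrite pow_mult. unfold Rsqr. f_equal. ring. Qed.

Definition re_term q := Re (exp_term y q).
Definition im_term q := Im (exp_term y q).

Lemma re_term_even j : re_term (2*j) = cos_n j * (Rsqr b)^j.
Proof. unfold re_term, exp_term. rewrite (proj1 (Cpow_imag j)). unfold Cmul, RtoC; cbn [Re Im]. unfold cos_n. rewrite pow_even_Rsqr. field. apply INR_fact_neq_0. Qed.
Lemma re_term_odd j : re_term (2*j+1) = 0.
Proof. unfold re_term, exp_term. rewrite (proj2 (Cpow_imag j)). unfold Cmul, RtoC; cbn [Re Im]. ring. Qed.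
Lemma im_term_even j : im_term (2*j) = 0.
Proof. unfold im_term, exp_term. rewrite (proj1 (Cpow_imag j)). unfold Cmul, RtoC; cbn [Re Im]. ring. Qed.
Lemma im_term_odd j : im_term (2*j+1) = b * (sin_n j * (Rsqr b)^j).
Proof. unfold im_term, exp_term. rewrite (proj2 (Cpow_imag j)). unfold Cmul, RtoC; cbn [Re Im]. unfold sin_n.
  rewrite pow_add, pow_even_Rsqr. field. apply INR_fact_neq_0. Qed.

Lemma re_term_partial_sums k : sum_f_R0 re_term (2*k) = sum_f_R0 (fun j => cos_n j * (Rsqr b)^j) k /\
              sum_f_R0 re_term (2*k+1) = sum_f_R0 (fun j => cos_n j * (Rsqr b)^j) k.
Proof.
  induction k.
  - simpl sum_f_R0. pose proof (re_term_even 0). pose proof (re_term_odd 0). simpl in *. split; lra.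
  - destruct IHk as [He Ho].
    assert (He' : sum_f_R0 re_term (2 * S k) = sum_f_R0 (fun j => cos_n j * (Rsqr b)^j) (S k)).
    { replace (2 * S k)%nat with (S (2*k+1)) by lia. rewrite tech5, Ho, tech5.
      replace (S (2*k+1)) with (2 * S k)%nat by lia. rewrite re_term_even. auto. }
    split; auto. replace (2 * S k + 1)%nat with (S (2 * S k)) by lia. rewrite tech5, He'.
    replace (S (2 * S k)) with (2 * S k + 1)%nat by lia. rewrite re_term_odd. ring.
Qed.
Lemma im_term_partial_sums k : sum_f_R0 im_term (2*k+1) = b * sum_f_R0 (fun j => sin_n j * (Rsqr b)^j) k /\
              sum_f_R0 im_term (2*k+2) = b * sum_f_R0 (fun j => sin_n j * (Rsqr b)^j) k.
Proof.
  induction k.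
  - simpl sum_f_R0. pose proof (im_term_even 0). pose proof (im_term_odd 0). pose proof (im_term_even 1). simpl in *. split; lra.
  - destruct IHk as [Ho He].
    assert (Ho' : sum_f_R0 im_term (2 * S k + 1) = b * sum_f_R0 (fun j => sin_n j * (Rsqr b)^j) (S k)).
    { replace (2 * S k + 1)%nat with (S (2*k+2)) by lia. rewrite tech5, He, tech5.
      replace (S (2*k+2)) with (2 * S k + 1)%nat by lia. rewrite im_term_odd. ring. }
    split; auto. replace (2 * S k + 2)%nat with (S (2 * S k + 1)) by lia. rewrite tech5, Ho'.
    replace (S (2 * S k + 1)) with (2 * (S (S k)))%nat by lia. rewrite im_term_even. ring.
Qed.

Lemma re_term_cv_cos : Un_cv (sum_f_R0 re_term) (cos b).
Proof.
  unfold cos. destruct (exist_cos (Rsqr b)) as [l Hl].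
  apply (cv_even_odd _ (sum_f_R0 (fun j => cos_n j * (Rsqr b)^j))). exact Hl.
  intros k; apply re_term_partial_sums. intros k; apply re_term_partial_sums.
Qed.
Lemma im_term_cv_sin : Un_cv (sum_f_R0 im_term) (sin b).
Proof.
  unfold sin. destruct (exist_sin (Rsqr b)) as [l Hl].
  apply Un_cv_shift. apply (cv_even_odd _ (fun k => b * sum_f_R0 (fun j => sin_n j * (Rsqr b)^j) k)).
  apply (Un_cv_ext _ (fun k => (fun _ => b) k * sum_f_R0 (fun j => sin_n j * (Rsqr b)^j) k)). intros; auto.
  apply CV_mult. apply cv_const. exact Hl.
  intros k. replace (S (2*k)) with (2*k+1)%nat by lia. apply im_term_partial_sums.
  intros k. replace (S (2*k+1)) with (2*k+2)%nat by lia. apply im_term_partial_sums.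
Qed.

Lemma Cmod_exp_term_imag q : Cmod (exp_term y q) = / INR (fact q) * Rabs b ^ q.
Proof.
  unfold exp_term. rewrite Cmod_mul, Cmod_RtoC. rewrite Rabs_pos_eq.
  f_equal. induction q. simpl. unfold Cmod, C1, RtoC; cbn [Re Im]. replace (1^2+0^2) with 1 by ring. apply sqrt_1.
  simpl. rewrite Cmod_mul, IHq. unfold Cmod, y; cbn [Re Im]. replace (0^2+b^2) with (b*b) by ring.
  rewrite <- (sqrt_Rsqr_abs b). unfold Rsqr. ring.
  apply Rlt_le, Rinv_0_lt_compat, lt_0_INR, lt_O_fact.
Qed.
End ImaginaryExponential.

(* With [z = a + i b], the exponential series is the Cauchy product of the real
   series of [exp a] with the series of [exp (i b)], whose real and imaginary parts
   are the cosine and sine series. *)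
Theorem Cexp_series z : Ccv (fun m => Csum (S m) (exp_term z)) (Cexp z).
Proof.
  set (a := Re z). set (b := Im z).
  assert (Hz : z = Cadd (RtoC a) (mkC 0 b)) by (apply Cx_ext; unfold Cadd, RtoC, a, b; cbn [Re Im]; ring).
  assert (HA : forall p, Rabs (/ INR (fact p) * a ^ p) <= / INR (fact p) * Rabs a ^ p).
  { intros p. rewrite Rabs_mult, <- RPow_abs, Rabs_pos_eq. lra. apply Rlt_le, Rinv_0_lt_compat, lt_0_INR, lt_O_fact. }
  unfold Ccv, Cexp. cbn [Re Im]. fold a b.
  split.
  - apply (Un_cv_ext _ (fun N => sum_f_R0 (fun k => sum_f_R0 (fun p => (/ INR (fact p) * a ^ p) * re_term b (k - p)%nat) k) N)).
    { intros N. rewrite Re_Csum, Rsum_sum_f_R0. apply sum_eq. intros k _. rewrite Hz, exp_term_add, Re_Cconv_RtoC. reflexivity. }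
    apply (Cauchy_product_cv _ _ (fun p => / INR (fact p) * Rabs a ^ p) (fun q => / INR (fact q) * Rabs b ^ q)); auto.
    intros q. rewrite <- Cmod_exp_term_imag. apply Re_le_Cmod. apply exp_cv. apply re_term_cv_cos. apply exp_Cauchy_product_rem.
  - apply (Un_cv_ext _ (fun N => sum_f_R0 (fun k => sum_f_R0 (fun p => (/ INR (fact p) * a ^ p) * im_term b (k - p)%nat) k) N)).
    { intros N. rewrite Im_Csum, Rsum_sum_f_R0. apply sum_eq. intros k _. rewrite Hz, exp_term_add, Im_Cconv_RtoC. reflexivity. }
    apply (Cauchy_product_cv _ _ (fun p => / INR (fact p) * Rabs a ^ p) (fun q => / INR (fact q) * Rabs b ^ q)); auto.
    intros q. rewrite <- Cmod_exp_term_imag. apply Im_le_Cmod. apply exp_cv. apply im_term_cv_sin. apply exp_Cauchy_product_rem.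
Qed.

Lemma Cexp_add z w : Cexp (Cadd z w) = Cmul (Cexp z) (Cexp w).
Proof. apply Cx_ext; unfold Cexp, Cadd, Cmul; cbn [Re Im]; rewrite exp_plus, ?cos_plus, ?sin_plus; ring. Qed.
Lemma Cexp_0 : Cexp C0 = C1.
Proof. apply Cx_ext; unfold Cexp, C0, C1, RtoC; cbn [Re Im]; rewrite exp_0, ?cos_0, ?sin_0; ring. Qed.

Lemma Ccv_ext s t z : (forall m, s m = t m) -> Ccv t z -> Ccv s z.
Proof. intros H [H1 H2]. split; eapply Un_cv_ext; eauto; intros; simpl; rewrite H; auto. Qed.
Lemma Ccv_add s t z w : Ccv s z -> Ccv t w -> Ccv (fun m => Cadd (s m) (t m)) (Cadd z w).
Proof. intros [H1 H2] [H3 H4]. split; simpl; apply CV_plus; auto. Qed.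
Lemma Ccv_const z : Ccv (fun _ => z) z.
Proof. split; apply cv_const. Qed.
Lemma Ccv_mul_r s z w : Ccv s z -> Ccv (fun m => Cmul (s m) w) (Cmul z w).
Proof. intros [H1 H2]. split; simpl.
  apply CV_minus; apply CV_mult; auto; apply cv_const.
  apply CV_plus; apply CV_mult; auto; apply cv_const. Qed.
Lemma Ccv_CLsum {X} (xs : list X) (f : nat -> X -> Cx) g :
  (forall x, In x xs -> Ccv (fun m => f m x) (g x)) -> Ccv (fun m => CLsum xs (f m)) (CLsum xs g).
Proof. induction xs; intros H. apply (Ccv_ext _ (fun _ => C0)). intros; auto. apply Ccv_const.
  rewrite CLsum_cons. apply (Ccv_ext _ (fun m => Cadd (f m a) (CLsum xs (f m)))).
  intros; apply CLsum_cons. apply Ccv_add. apply H; simpl; auto. apply IHxs. intros; apply H; simpl; auto. Qed.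
Lemma Ccv_Csum k (f : nat -> nat -> Cx) g :
  (forall x, (x < k)%nat -> Ccv (fun m => f m x) (g x)) -> Ccv (fun m => Csum k (f m)) (Csum k g).
Proof. induction k; intros H. simpl. apply Ccv_const. simpl. apply Ccv_add. apply IHk; intros; apply H; lia. apply H; lia. Qed.
Lemma Ccv_unique s z w : Ccv s z -> Ccv s w -> z = w.
Proof. intros [H1 H2] [H3 H4]. apply Cx_ext; eapply UL_sequence; eauto. Qed.

(** * The matrix exponential *)

Definition Mexp_partial n M m i j := Csum (S m) (fun k => Cmul (RtoC (/ INR (fact k))) (Mpow n M k i j)).

Lemma is_Mexp_Ccv n M X : is_Mexp n M X <-> (forall i j, (i < n)%nat -> (j < n)%nat -> Ccv (fun m => Mexp_partial n M m i j) (X i j)).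
Proof. unfold is_Mexp, Ccv, Mexp_partial. split; intros H i j Hi Hj; apply H; auto. Qed.

Lemma Mexp_unique n M X : is_Mexp n M X -> Meq n (Mexp n M) X.
Proof.
  intros H. assert (H' : is_Mexp n M (Mexp n M)) by (unfold Mexp; apply epsilon_spec; exists X; auto).
  rewrite is_Mexp_Ccv in H, H'. intros i j Hi Hj. eapply Ccv_unique; eauto.
Qed.

Lemma Mexp_scale_hermitian n A l lam E c : hermitian n A -> spectral_data n A l lam E ->
  Meq n (Mexp n (Mscale c A)) (spectral_sum l E (fun k => Cexp (Cmul c (RtoC (lam k))))).
Proof.
  intros HA HS. apply Mexp_unique. apply is_Mexp_Ccv. intros i j Hi Hj.
  apply (Ccv_ext _ (fun m => CLsum (seq 0 l) (fun k => Cmul (Csum (S m) (exp_term (Cmul c (RtoC (lam k))))) (E k i j)))).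
  - intros m. unfold Mexp_partial.
    rewrite (Csum_ext _ _ (fun p => CLsum (seq 0 l) (fun k => Cmul (exp_term (Cmul c (RtoC (lam k))) p) (E k i j)))).
    + rewrite Csum_CLsum. apply CLsum_ext. intros k _. rewrite Csum_scal_r. reflexivity.
    + intros p _. rewrite (Mpow_scale_A n A l lam E HA HS c p i j Hi Hj). unfold spectral_sum.
      rewrite Msum_list_map_entry, <- CLsum_scal. apply CLsum_ext. intros k _. unfold Mscale, exp_term. ring.
  - unfold spectral_sum. rewrite Msum_list_map_entry. apply Ccv_CLsum. intros k _. unfold Mscale.
    apply Ccv_mul_r. apply Cexp_series.
Qed.

Lemma opnorm_Mpow n M k : opnorm n (Mpow n M k) <= opnorm n M ^ k.
Proof. induction k; simpl. apply opnorm_Mid. eapply Rle_trans. apply opnorm_mul.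
  pose proof (opnorm_nonneg n M). pose proof (opnorm_nonneg n (Mpow n M k)). rewrite Rmult_comm. 
  apply Rmult_le_compat_l; auto. Qed.

Definition rexp_term b k := / INR (fact k) * b ^ k.
Lemma rexp_term_nonneg b k : 0 <= b -> 0 <= rexp_term b k.
Proof. intros. unfold rexp_term. apply Rmult_le_pos. apply Rlt_le, Rinv_0_lt_compat, lt_0_INR, lt_O_fact. apply pow_le; auto. Qed.

Lemma Cmod_Mexp_term_le n M k i j : (i < n)%nat -> (j < n)%nat ->
  Cmod (Cmul (RtoC (/ INR (fact k))) (Mpow n M k i j)) <= rexp_term (opnorm n M) k.
Proof.
  intros Hi Hj. rewrite Cmod_mul, Cmod_RtoC, Rabs_pos_eq. unfold rexp_term. apply Rmult_le_compat_l.
  apply Rlt_le, Rinv_0_lt_compat, lt_0_INR, lt_O_fact.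
  apply Rle_trans with (opnorm n (Mpow n M k)). apply Cmod_entry_le_opnorm; auto. apply opnorm_Mpow.
  apply Rlt_le, Rinv_0_lt_compat, lt_0_INR, lt_O_fact.
Qed.

Lemma Mexp_partial_diff n M m d i j : (i < n)%nat -> (j < n)%nat ->
  Cmod (Csub (Mexp_partial n M (m + d) i j) (Mexp_partial n M m i j)) <=
  sum_f_R0 (rexp_term (opnorm n M)) (m + d) - sum_f_R0 (rexp_term (opnorm n M)) m.
Proof.
  intros Hi Hj. induction d.
  - rewrite Nat.add_0_r. replace (Csub (Mexp_partial n M m i j) (Mexp_partial n M m i j)) with C0 by ring.
    rewrite Cmod_C0. lra.
  - replace (m + S d)%nat with (S (m + d)) by lia. rewrite tech5.
    unfold Mexp_partial at 1. change (Csum (S (S (m+d))) ?f) with (Cadd (Csum (S (m+d)) f) (f (S (m+d)))).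
    cbv beta. fold (Mexp_partial n M (m + d) i j).
    replace (Csub (Cadd (Mexp_partial n M (m + d) i j) (Cmul (RtoC (/ INR (fact (S (m + d))))) (Mpow n M (S (m + d)) i j))) (Mexp_partial n M m i j))
      with (Cadd (Csub (Mexp_partial n M (m + d) i j) (Mexp_partial n M m i j)) (Cmul (RtoC (/ INR (fact (S (m + d))))) (Mpow n M (S (m + d)) i j))) by ring.
    eapply Rle_trans. apply Cmod_add. pose proof (Cmod_Mexp_term_le n M (S (m + d)) i j Hi Hj). lra.
Qed.

Lemma Cauchy_crit_dominated (u w : nat -> R) : (forall m d, Rabs (u (m+d)%nat - u m) <= Rabs (w (m+d)%nat - w m)) ->
  Cauchy_crit w -> Cauchy_crit u.
Proof.
  intros H Hw eps He. destruct (Hw eps He) as [N HN]. exists N. intros a b Ha Hb. unfold Rdist.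
  destruct (le_lt_dec b a).
  - replace a with (b + (a - b))%nat by lia. eapply Rle_lt_trans. apply H.
    replace (b + (a - b))%nat with a by lia. apply HN; auto.
  - rewrite Rabs_minus_sym. replace b with (a + (b - a))%nat by lia. eapply Rle_lt_trans. apply H.
    replace (a + (b - a))%nat with b by lia. rewrite Rabs_minus_sym. apply HN; auto.
Qed.

Lemma Ccv_of_Cauchy_dominated (s : nat -> Cx) (w : nat -> R) :
  (forall m d, Cmod (Csub (s (m + d)%nat) (s m)) <= w (m + d)%nat - w m) ->
  Cauchy_crit w -> exists z, Ccv s z.
Proof.
  intros H Hw.
  assert (Hre : Cauchy_crit (fun m => Re (s m))).
  { apply (Cauchy_crit_dominated _ w); auto. intros m d.
    replace (Re (s (m + d)%nat) - Re (s m)) with (Re (Csub (s (m + d)%nat) (s m)))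
      by (unfold Csub, Cadd, Copp; cbn [Re]; ring).
    eapply Rle_trans; [apply Re_le_Cmod|]. eapply Rle_trans; [apply H|apply Rle_abs]. }
  assert (Him : Cauchy_crit (fun m => Im (s m))).
  { apply (Cauchy_crit_dominated _ w); auto. intros m d.
    replace (Im (s (m + d)%nat) - Im (s m)) with (Im (Csub (s (m + d)%nat) (s m)))
      by (unfold Csub, Cadd, Copp; cbn [Im]; ring).
    eapply Rle_trans; [apply Im_le_Cmod|]. eapply Rle_trans; [apply H|apply Rle_abs]. }
  destruct (R_complete _ Hre) as [a Ha]. destruct (R_complete _ Him) as [b Hb].
  exists (mkC a b). split; auto.
Qed.

Lemma is_Mexp_Mexp n M : is_Mexp n M (Mexp n M).
Proof.
  unfold Mexp. apply epsilon_spec.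
  exists (fun i j => epsilon (inhabits C0) (Ccv (fun m => Mexp_partial n M m i j))).
  apply is_Mexp_Ccv. intros i j Hi Hj. apply epsilon_spec.
  apply (Ccv_of_Cauchy_dominated _ (sum_f_R0 (rexp_term (opnorm n M)))).
  - intros m d. apply Mexp_partial_diff; auto.
  - apply CV_Cauchy. exists (exp (opnorm n M)). apply exp_cv.
Qed.

Lemma opnorm_Csum n m (c : nat -> Cx) (G : nat -> Mat) :
  opnorm n (fun i j => Csum m (fun k => Cmul (c k) (G k i j))) <= Rsum m (fun k => Cmod (c k) * opnorm n (G k)).
Proof.
  induction m.
  - simpl. rewrite opnorm_zero. lra. intros i j _ _. reflexivity.
  - change (fun i j => Csum (S m) (fun k => Cmul (c k) (G k i j))) with
      (Madd (fun i j => Csum m (fun k => Cmul (c k) (G k i j))) (Mscale (c m) (G m))).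
    eapply Rle_trans. apply opnorm_add. simpl. pose proof (opnorm_scale n (c m) (G m)). lra.
Qed.

Lemma Rsum_cv k (f : nat -> nat -> R) g :
  (forall x, (x < k)%nat -> Un_cv (fun m => f m x) (g x)) -> Un_cv (fun m => Rsum k (f m)) (Rsum k g).
Proof. induction k; intros H. simpl. apply cv_const. simpl. apply CV_plus. apply IHk; intros; apply H; lia. apply H; lia. Qed.

Lemma Vnorm_cv n (w : nat -> Vec) u : (forall i, (i < n)%nat -> Ccv (fun m => w m i) (u i)) ->
  Un_cv (fun m => Vnorm n (w m)) (Vnorm n u).
Proof.
  intros H. apply (Un_cv_ext _ (fun m => sqrt (Vrdot n (w m) (w m)))). intros; apply Vnorm_Vrdot.
  rewrite Vnorm_Vrdot. apply continuity_seq. apply continuity_pt_sqrt, Vrdot_self_nonneg.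
  unfold Vrdot. apply Rsum_cv. intros x Hx. destruct (H x Hx) as [H1 H2].
  apply CV_plus; apply CV_mult; auto.
Qed.

Lemma opnorm_le_of_Ccv n (Xs : nat -> Mat) X K :
  (forall i j, (i < n)%nat -> (j < n)%nat -> Ccv (fun m => Xs m i j) (X i j)) ->
  (forall m, opnorm n (Xs m) <= K) -> opnorm n X <= K.
Proof.
  intros HX HK. apply opnorm_le. intros v Hv.
  assert (Hcv : Un_cv (fun m => Vnorm n (Mvec n (Xs m) v)) (Vnorm n (Mvec n X v))).
  { apply Vnorm_cv. intros i Hi. unfold Mvec. apply Ccv_Csum. intros j Hj. apply Ccv_mul_r. auto. }
  refine (Rle_cv_lim _ Hcv (cv_const K)).
  intros m. eapply Rle_trans. apply Vnorm_Mvec_le.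
  pose proof (HK m). pose proof (opnorm_nonneg n (Xs m)). pose proof (Vnorm_nonneg n v).
  apply Rle_trans with (opnorm n (Xs m) * 1); [apply Rmult_le_compat_l|]; lra.
Qed.

Definition MsubI (X : Mat) : Mat := fun i j => Csub (X i j) (Mid i j).

Lemma sum_rexp_term_S b m : Rsum m (fun k => rexp_term b (S k)) = sum_f_R0 (rexp_term b) m - 1.
Proof.
  induction m.
  - unfold rexp_term. simpl. field.
  - cbn [Rsum]. rewrite IHm, tech5. ring.
Qed.

Lemma opnorm_Mexp_partial_sub_Mid n M m :
  opnorm n (MsubI (fun i j => Mexp_partial n M m i j)) <= exp (opnorm n M) - 1.
Proof.
  set (b := opnorm n M). assert (Hb : 0 <= b) by apply opnorm_nonneg.
  assert (Hfact : forall k, 0 <= / INR (fact k)) by (intros; apply Rlt_le, Rinv_0_lt_compat, lt_0_INR, lt_O_fact).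
  apply Rle_trans with (opnorm n (fun i j => Csum m (fun k => Cmul (RtoC (/ INR (fact (S k)))) (Mpow n M (S k) i j)))).
  - apply opnorm_Meq_le. intros i j _ _. unfold MsubI, Mexp_partial. rewrite Csum_S_l. simpl fact. simpl Mpow.
    replace (/ INR 1) with 1 by (simpl; field). rewrite RtoC_1.
    unfold Csub, Copp, Cadd, Cmul; apply Cx_ext; cbn [Re Im]; unfold C1, RtoC; cbn [Re Im]; ring.
  - eapply Rle_trans. apply opnorm_Csum.
    apply Rle_trans with (Rsum m (fun k => rexp_term b (S k))).
    + apply Rsum_le. intros k _. rewrite Cmod_RtoC, Rabs_pos_eq by apply Hfact.
      apply Rmult_le_compat_l; [apply Hfact|apply opnorm_Mpow].
    + rewrite sum_rexp_term_S.
      pose proof (sum_incr (rexp_term b) m (exp b) (exp_cv b) (fun k => rexp_term_nonneg b k Hb)). lra.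
Qed.

Lemma opnorm_Mexp_sub_Mid n M : opnorm n (MsubI (Mexp n M)) <= exp (opnorm n M) - 1.
Proof.
  apply (opnorm_le_of_Ccv n (fun m => MsubI (fun i j => Mexp_partial n M m i j))).
  - intros i j Hi Hj. unfold MsubI, Csub. apply Ccv_add; [|apply Ccv_const].
    apply (proj1 (is_Mexp_Ccv n M _) (is_Mexp_Mexp n M)); auto.
  - apply opnorm_Mexp_partial_sub_Mid.
Qed.

(** * Expansion of the approximant *)

Lemma in_tuples l j ks : In ks (tuples l j) -> length ks = j /\ (forall k, In k ks -> (k < l)%nat).
Proof.
  revert ks. induction j; intros ks H; simpl in H.
  - destruct H as [<-|[]]. simpl. split; auto. intros k [].
  - apply in_flat_map in H. destruct H as [k [Hk H]]. apply in_map_iff in H. destruct H as [ks' [<- H]].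
    apply in_seq in Hk. destruct (IHj ks' H). split. simpl; auto. intros k' [<-|Hk']. lia. auto.
Qed.

Lemma Nsum_count_occ l ks : (forall k, In k ks -> (k < l)%nat) ->
  Nsum l (fun j => count_occ Nat.eq_dec ks j) = length ks.
Proof.
  induction ks; intros H. simpl. apply Nsum_0.
  simpl count_occ.
  rewrite (Nsum_ext _ _ (fun j => ((if Nat.eq_dec a j then 1 else 0) + count_occ Nat.eq_dec ks j)%nat)).
  - rewrite Nsum_add, Nsum_delta by (apply H; simpl; auto). simpl length.
    rewrite <- IHks by (intros; apply H; simpl; auto). reflexivity.
  - intros i _. destruct (Nat.eq_dec a i); lia.
Qed.

Lemma Rsum_count_occ l (lam : nat -> R) ks : (forall k, In k ks -> (k < l)%nat) ->
  Rsum l (fun j => INR (count_occ Nat.eq_dec ks j) * lam j) = fold_right Rplus 0 (map lam ks).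
Proof.
  induction ks; intros H.
  - simpl. rewrite (Rsum_ext _ _ (fun _ => 0)). apply Rsum_0. intros; simpl; ring.
  - simpl count_occ.
    rewrite (Rsum_ext _ _ (fun j => (if Nat.eq_dec a j then lam j else 0) + INR (count_occ Nat.eq_dec ks j) * lam j)).
    + rewrite Rsum_add, (Rsum_delta l a lam) by (apply H; simpl; auto). simpl map. simpl fold_right.
      f_equal. apply IHks. intros; apply H; simpl; auto.
    + intros i _. destruct (Nat.eq_dec a i). rewrite S_INR; ring. ring.
Qed.

(* The multiplicities [n_j] of the mean [(lam k_1 + ... + lam k_N) / N] are the
   occurrence counts of [j] in the tuple. *)
Lemma tuple_mean_in_chN l N lam ks : In ks (tuples l N) -> in_chN l N lam (tuple_mean lam N ks).
Proof.
  intros H. destruct (in_tuples l N ks H) as [Hlen Hall].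
  exists (fun j => count_occ Nat.eq_dec ks j). split.
  - rewrite Nsum_count_occ; auto.
  - unfold tuple_mean. rewrite <- (Rsum_count_occ l lam ks Hall).
    unfold Rdiv. rewrite Rmult_comm, <- Rsum_scal. apply Rsum_ext. intros; ring.
Qed.

Definition tuple_weight (w : nat -> Cx) (ks : list nat) : Cx := fold_right (fun k acc => Cmul (w k) acc) C1 ks.

Lemma tuple_weight_Cexp c lam ks :
  tuple_weight (fun k => Cexp (Cmul c (RtoC (lam k)))) ks = Cexp (Cmul c (RtoC (fold_right Rplus 0 (map lam ks)))).
Proof.
  induction ks; simpl.
  - replace (Cmul c (RtoC 0)) with C0 by (rewrite RtoC_0; ring). symmetry. apply Cexp_0.
  - rewrite IHks, <- Cexp_add, RtoC_add. f_equal. ring.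
Qed.

Section Expansion.
Variables (n l : nat) (E : nat -> Mat) (eB : Mat).

Lemma Mpow_spectral_sum_mul_expand w j :
  Meq n (Mpow n (Mmul n (spectral_sum l E w) eB) j)
        (Msum_list (map (fun ks => Mscale (tuple_weight w ks) (Mtuple n E eB ks)) (tuples l j))).
Proof.
  induction j; intros i j' Hi Hj.
  - simpl. unfold Madd, Mscale, Mzero. simpl. ring.
  - rewrite Mpow_S_l by auto. rewrite (Mmul_Meq n _ _ _ _ (Meq_refl n _) IHj i j' Hi Hj).
    unfold spectral_sum. rewrite Mmul_assoc, Mmul_sum_l, Msum_list_map_entry. cbn [tuples].
    rewrite CLsum_flat_map. apply CLsum_ext. intros k _.
    rewrite Mmul_scale_l, <- Mmul_assoc, Mmul_sum_r, CLsum_map, <- CLsum_scal.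
    apply CLsum_ext. intros ks _.
    rewrite Mmul_scale_r. unfold Mscale. simpl. ring.
Qed.
End Expansion.

Lemma sum_tuples_by_mean n l N lam E B L t : enumerates_chN l N lam L ->
  Meq n (Msum_list (map (fun ks => Mscale (Cexp (Cmul t (RtoC (tuple_mean lam N ks))))
                                          (Mtuple n E (Mexp n (Mscale (RtoC (/ INR N)) B)) ks)) (tuples l N)))
        (Msum_list (map (fun x => Mscale (Cexp (Cmul t (RtoC x))) (MN n l N lam E B x)) L)).
Proof.
  intros [Hnd HL] i j _ _. set (eB := Mexp n (Mscale (RtoC (/ INR N)) B)).
  rewrite !Msum_list_map_entry.
  rewrite (CLsum_ext L _ (fun x => CLsum (tuples l N) (fun ks =>
      if Req_dec_T (tuple_mean lam N ks) x
      then Cmul (Cexp (Cmul t (RtoC (tuple_mean lam N ks)))) (Mtuple n E eB ks i j) else C0))).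
  - rewrite CLsum_swap. apply CLsum_ext. intros ks Hks. symmetry.
    apply (CLsum_delta Req_dec_T L (tuple_mean lam N ks)
             (fun _ => Cmul (Cexp (Cmul t (RtoC (tuple_mean lam N ks)))) (Mtuple n E eB ks i j))); auto.
    apply HL, tuple_mean_in_chN; auto.
  - intros x _. unfold Mscale, MN. cbv zeta. fold eB. rewrite Msum_list_map_entry, <- CLsum_scal.
    apply CLsum_ext. intros ks _. destruct (Req_dec_T (tuple_mean lam N ks) x).
    + subst x. reflexivity.
    + unfold Mzero. ring.
Qed.

Lemma approximant_expansion n A B N l lam E L t :
  hermitian n A -> spectral_data n A l lam E -> enumerates_chN l N lam L ->
  Meq n (Mpow n (Mmul n (Mexp n (Mscale (Cmul t (RtoC (/ INR N))) A)) (Mexp n (Mscale (RtoC (/ INR N)) B))) N)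
        (Msum_list (map (fun x => Mscale (Cexp (Cmul t (RtoC x))) (MN n l N lam E B x)) L)).
Proof.
  intros HA HS HL. set (c := Cmul t (RtoC (/ INR N))). set (eB := Mexp n (Mscale (RtoC (/ INR N)) B)).
  eapply Meq_trans; [apply Mpow_Meq, Mmul_Meq; [apply (Mexp_scale_hermitian n A l lam E c HA HS)|apply Meq_refl]|].
  eapply Meq_trans; [apply Mpow_spectral_sum_mul_expand|].
  eapply Meq_trans; [|apply (sum_tuples_by_mean n l N lam E B L t HL)].
  intros i j _ _. rewrite !Msum_list_map_entry. apply CLsum_ext. intros ks _.
  unfold Mscale. rewrite tuple_weight_Cexp. unfold tuple_mean, Rdiv, c.
  rewrite (RtoC_mul _ (/ INR N)). f_equal. f_equal. ring.
Qed.

(** * The total variation bound *)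

Section TupleNorms.
Variables (n : nat) (A : Mat) (l : nat) (lam : nat -> R) (E : nat -> Mat) (eB : Mat).
Hypothesis HA : hermitian n A.
Hypothesis HS : spectral_data n A l lam E.

Let Q := Mtuple n E eB.
Let d := opnorm n (MsubI eB).

Lemma opnorm_E_mul_eB_mul k X : (k < l)%nat ->
  opnorm n (Mmul n (Mmul n (E k) eB) X) <= opnorm n (Mmul n (E k) X) + d * opnorm n X.
Proof.
  intros Hk.
  assert (Hsplit : Meq n (Mmul n (Mmul n (E k) eB) X) (Madd (Mmul n (E k) X) (Mmul n (Mmul n (E k) (MsubI eB)) X))).
  { intros i j Hi Hj. transitivity (Mmul n (Madd (E k) (Mmul n (E k) (MsubI eB))) X i j).
    - apply Mmul_Meq; auto; [|apply Meq_refl]. intros a b Ha Hb.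
      transitivity (Mmul n (E k) (Madd Mid (MsubI eB)) a b).
      + apply Mmul_Meq; auto; [apply Meq_refl|]. intros r s _ _.
        unfold Madd, MsubI, Csub, Copp, Cadd. apply Cx_ext; cbn [Re Im]; ring.
      + rewrite Mmul_add_r, Mmul_Mid_r by auto. reflexivity.
    - rewrite Mmul_add_l. reflexivity. }
  rewrite (opnorm_Meq _ _ _ Hsplit). eapply Rle_trans; [apply opnorm_add|]. apply Rplus_le_compat_l.
  eapply Rle_trans; [apply opnorm_mul|]. apply Rmult_le_compat_r; [apply opnorm_nonneg|].
  eapply Rle_trans; [apply opnorm_mul|].
  pose proof (opnorm_E_le1 n A l lam E HS k Hk). pose proof (opnorm_nonneg n (MsubI eB)).
  pose proof (opnorm_nonneg n (E k)). unfold d. nra.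
Qed.

(* Only the projector matching the first index of the tuple survives, since [E k E k' = 0] for [k <> k']. *)
Lemma sum_opnorm_E_mul_Mtuple_cons k' rest : (k' < l)%nat ->
  Lsum (seq 0 l) (fun k => opnorm n (Mmul n (E k) (Q (k' :: rest)))) = opnorm n (Q (k' :: rest)).
Proof.
  intros Hk'.
  rewrite (Lsum_ext _ _ (fun k => if Nat.eq_dec k' k then opnorm n (Q (k' :: rest)) else 0)).
  { apply Lsum_delta. apply seq_NoDup. apply in_seq; lia. }
  intros k Hk. apply in_seq in Hk.
  change (Q (k' :: rest)) with (Mmul n (Mmul n (E k') eB) (Q rest)).
  assert (H1 : Meq n (Mmul n (E k) (Mmul n (Mmul n (E k') eB) (Q rest)))
                     (Mmul n (Mmul n (if Nat.eq_dec k k' then E k' else Mzero) eB) (Q rest))).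
  { intros i j Hi Hj. rewrite <- Mmul_assoc. apply Mmul_Meq; auto; [|apply Meq_refl].
    intros a b Ha Hb. rewrite <- Mmul_assoc.
    apply Mmul_Meq; auto; [apply (E_mul_E n A l lam E HA HS); lia | apply Meq_refl]. }
  rewrite (opnorm_Meq _ _ _ H1).
  destruct (Nat.eq_dec k k'); destruct (Nat.eq_dec k' k); try lia; subst; auto.
  apply opnorm_zero. intros i j Hi Hj. unfold Mmul at 1.
  transitivity (Csum n (fun _ => C0)); [|apply Csum_0]. apply Csum_ext; intros.
  rewrite Mmul_zero_l. ring.
Qed.

Definition tuple_norm_sum j := Lsum (tuples l j) (fun ks => opnorm n (Mtuple n E eB ks)).

Lemma tuple_norm_sum_S j : tuple_norm_sum (S j) <=
  Lsum (tuples l j) (fun ks => Lsum (seq 0 l) (fun k => opnorm n (Mmul n (E k) (Q ks))))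
  + INR l * d * tuple_norm_sum j.
Proof.
  unfold tuple_norm_sum. cbn [tuples]. rewrite Lsum_flat_map.
  rewrite (Lsum_ext _ _ (fun k => Lsum (tuples l j) (fun ks => opnorm n (Q (k :: ks))))).
  2:{ intros k _. rewrite Lsum_map. auto. }
  rewrite Lsum_swap, <- Lsum_scal, <- Lsum_add. apply Lsum_le. intros ks _.
  replace (INR l * d * opnorm n (Mtuple n E eB ks)) with (Lsum (seq 0 l) (fun _ => d * opnorm n (Q ks)))
    by (rewrite Lsum_const, length_seq; unfold Q; ring).
  rewrite <- Lsum_add. apply Lsum_le. intros k Hk. apply in_seq in Hk.
  apply opnorm_E_mul_eB_mul. lia.
Qed.

Lemma tuple_norm_sum_0 : tuple_norm_sum 0 <= 1.
Proof. unfold tuple_norm_sum. cbn [tuples]. rewrite Lsum_cons. change (Lsum nil ?g) with 0. simpl Mtuple. pose proof (opnorm_Mid n). lra. Qed.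

Lemma tuple_norm_sum_1 : tuple_norm_sum 1 <= INR l * (1 + INR l * d).
Proof.
  pose proof (tuple_norm_sum_S 0) as H. cbn [tuples] in H. rewrite Lsum_cons in H.
  change (Lsum nil ?g) with 0 in H. change (Q nil) with Mid in H.
  assert (H1 : Lsum (seq 0 l) (fun k => opnorm n (Mmul n (E k) Mid)) <= INR l).
  { replace (INR l) with (Lsum (seq 0 l) (fun _ => 1)) by (rewrite Lsum_const, length_seq; ring).
    apply Lsum_le. intros k Hk. apply in_seq in Hk. eapply Rle_trans. apply opnorm_mul.
    pose proof (opnorm_E_le1 n A l lam E HS k ltac:(lia)). pose proof (opnorm_Mid n).
    pose proof (opnorm_nonneg n (E k)). pose proof (opnorm_nonneg n Mid). nra. }
  pose proof tuple_norm_sum_0. assert (Hd : 0 <= d) by apply opnorm_nonneg. pose proof (pos_INR l).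
  assert (INR l * d <= INR l * INR l * d).
  { destruct l. simpl; lra. rewrite S_INR. pose proof (pos_INR n0). nra. }
  assert (INR l * d * tuple_norm_sum 0 <= INR l * d) by (pose proof (Rmult_le_pos _ _ (pos_INR l) Hd); nra).
  nra.
Qed.

Lemma tuple_norm_sum_S_le j : (1 <= j)%nat -> tuple_norm_sum (S j) <= (1 + INR l * d) * tuple_norm_sum j.
Proof.
  intros Hj. eapply Rle_trans. apply tuple_norm_sum_S.
  rewrite (Lsum_ext (tuples l j) _ (fun ks => opnorm n (Q ks))).
  - unfold tuple_norm_sum. fold Q. lra.
  - intros ks Hks. destruct (in_tuples l j ks Hks) as [Hlen Hall]. destruct ks as [|k' rest].
    + simpl in Hlen; lia.
    + apply sum_opnorm_E_mul_Mtuple_cons. apply Hall; simpl; auto.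
Qed.

Lemma tuple_norm_sum_le j : (1 <= j)%nat -> tuple_norm_sum j <= INR l * (1 + INR l * d) ^ j.
Proof.
  intros Hj. induction j. lia. destruct j. simpl. pose proof tuple_norm_sum_1. lra.
  eapply Rle_trans. apply tuple_norm_sum_S_le; lia.
  assert (0 <= 1 + INR l * d) by (pose proof (opnorm_nonneg n (MsubI eB)); pose proof (pos_INR l); unfold d; nra).
  replace (INR l * (1 + INR l * d) ^ S (S j)) with ((1 + INR l * d) * (INR l * (1 + INR l * d) ^ S j)) by (simpl; ring).
  apply Rmult_le_compat_l; auto. apply IHj; lia.
Qed.
End TupleNorms.

Lemma sum_opnorm_MN_le n l N lam E B L : NoDup L ->
  Lsum L (fun x => opnorm n (MN n l N lam E B x)) <=
  tuple_norm_sum n l E (Mexp n (Mscale (RtoC (/ INR N)) B)) N.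
Proof.
  intros Hnd. set (eB := Mexp n (Mscale (RtoC (/ INR N)) B)).
  transitivity (Lsum L (fun x => Lsum (tuples l N) (fun ks =>
    if Req_dec_T (tuple_mean lam N ks) x then opnorm n (Mtuple n E eB ks) else 0))).
  - apply Lsum_le. intros x _. unfold MN. cbv zeta. fold eB.
    eapply Rle_trans; [apply opnorm_Msum_list|]. apply Lsum_le. intros ks _.
    destruct (Req_dec_T (tuple_mean lam N ks) x); [lra|].
    rewrite opnorm_zero; [lra|apply Meq_refl].
  - rewrite Lsum_swap. apply Lsum_le. intros ks _. apply Lsum_delta_le; auto. apply opnorm_nonneg.
Qed.

Lemma exp_le_exp x y : x <= y -> exp x <= exp y.
Proof. intros [H|H]. left; apply exp_increasing; auto. right; subst; auto. Qed.

Lemma exp_INR_mul k x : exp (INR k * x) = exp x ^ k.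
Proof.
  induction k. simpl. rewrite Rmult_0_l, exp_0. auto.
  rewrite S_INR. replace ((INR k + 1) * x) with (INR k * x + x) by ring. rewrite exp_plus, IHk. simpl. ring.
Qed.

Lemma Bernoulli_ineq y k : 0 <= y -> 1 + INR k * y <= (1 + y) ^ k.
Proof.
  intros Hy. induction k. simpl. lra. rewrite S_INR. simpl.
  assert (0 <= INR k) by apply pos_INR. nra.
Qed.

(* [1 + l d <= (1 + d)^l <= e^(l b / N)] by Bernoulli's inequality. *)
Lemma approximant_bound_arith n l N b d : (l <= n)%nat -> (1 <= N)%nat -> 0 <= b -> 0 <= d ->
  d <= exp (b / INR N) - 1 -> INR l * (1 + INR l * d) ^ N <= INR n * exp (INR n * b).
Proof.
  intros Hln HN Hb Hd Hdb.
  assert (HNp : 0 < INR N) by (apply lt_0_INR; lia).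
  set (x := b / INR N). assert (Hx : 0 <= x) by (unfold x; apply Rmult_le_pos; auto; left; apply Rinv_0_lt_compat; auto).
  assert (Hex : 1 <= exp x) by (rewrite <- exp_0; apply exp_le_exp; auto).
  pose proof (pos_INR l) as Hl.
  assert (H1 : 1 + INR l * d <= exp (INR l * x)).
  { rewrite exp_INR_mul. replace (exp x) with (1 + (exp x - 1)) by ring.
    eapply Rle_trans; [|apply Bernoulli_ineq; lra]. fold x in Hdb. nra. }
  assert (H2 : (1 + INR l * d) ^ N <= exp (INR l * b)).
  { replace (INR l * b) with (INR N * (INR l * x)) by (unfold x; field; lra).
    rewrite exp_INR_mul. apply pow_incr. split; auto. pose proof (Rmult_le_pos _ _ Hl Hd). lra. }
  assert (H3 : INR l <= INR n) by (apply le_INR; auto).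
  assert (H4 : exp (INR l * b) <= exp (INR n * b)) by (apply exp_le_exp; nra).
  assert (0 <= (1 + INR l * d) ^ N) by (apply pow_le; pose proof (Rmult_le_pos _ _ Hl Hd); lra).
  pose proof (exp_pos (INR l * b)).
  apply Rle_trans with (INR l * exp (INR l * b)). apply Rmult_le_compat_l; auto.
  apply Rmult_le_compat; lra.
Qed.

Lemma opnorm_Mexp_div_sub_Mid n N B : (1 <= N)%nat ->
  opnorm n (MsubI (Mexp n (Mscale (RtoC (/ INR N)) B))) <= exp (opnorm n B / INR N) - 1.
Proof.
  intros HN. eapply Rle_trans; [apply opnorm_Mexp_sub_Mid|].
  apply Rplus_le_compat_r, exp_le_exp. eapply Rle_trans; [apply opnorm_scale|].
  assert (0 < / INR N) by (apply Rinv_0_lt_compat, lt_0_INR; lia).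
  rewrite Cmod_RtoC, Rabs_pos_eq by lra. unfold Rdiv. lra.
Qed.

Theorem lemma6p2 (n : nat) (A B : Mat) (N : nat)
  (l : nat) (lam : nat -> R) (E : nat -> Mat) (L : list R) :
  hermitian n A ->
  spectral_data n A l lam E ->
  (1 <= N)%nat ->
  enumerates_chN l N lam L ->
  (forall t : Cx,
     Meq n
       (Mpow n (Mmul n (Mexp n (Mscale (Cmul t (RtoC (/ INR N))) A))
                       (Mexp n (Mscale (RtoC (/ INR N)) B))) N)
       (Msum_list (map (fun x => Mscale (Cexp (Cmul t (RtoC x))) (MN n l N lam E B x)) L)))
  /\
  fold_right Rplus 0 (map (fun x => opnorm n (MN n l N lam E B x)) L)
    <= INR n * exp (INR n * opnorm n B).
Proof.
  intros HA HS HN HL. split.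
  - intros t. apply approximant_expansion; auto.
  - change (fold_right Rplus 0 (map (fun x => opnorm n (MN n l N lam E B x)) L))
      with (Lsum L (fun x => opnorm n (MN n l N lam E B x))).
    eapply Rle_trans; [apply sum_opnorm_MN_le, HL|].
    eapply Rle_trans; [apply (tuple_norm_sum_le n A l lam E _ HA HS N HN)|].
    apply approximant_bound_arith; auto using opnorm_nonneg, opnorm_Mexp_div_sub_Mid.
    apply (num_eigenvalues_le_dim n A l lam E HA HS).
Qed.
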